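(* Let $X$ be a complex Banach space with open unit ball $B$, let $S:X\to X$ be a bounded linear operator of finite rank such that $P=I-S$ satisfies $\|P\|=1$. Then for every $\phi\in M_0(B)$ (the fiber over $0$ of the spectrum of $A_u(B)$) and every $f\in A_u(B)$ we have $\hat f(\phi)=\widehat{f\circ P}(\phi)$. (Note $f\circ P\in A_u(B)$ since $P(B)\subset B$.)
   Context: $X$ is a complex Banach space, $B$ its open unit ball, $\bar B^{**}$ the closed unit ball of $X^{**}$. $A_u(B)$ denotes the uniform algebra (with the supremum norm on $B$) of all bounded holomorphic functions $f:B\to\mathbb C$ that are uniformly continuous on $B$. For a uniform algebra $H$ of functions on $B$ containing the restrictions of elements of $X^*$, $M_H$ is its spectrum (nonzero multiplicative linear functionals), $\hat f(\tau)=\tau(f)$ is the Gelfand transform, and for $x^{**}\in\bar B^{**}$ the fiber over $x^{**}$ is $M_{x^{**}}(B)=\{\tau\in M_H:\ \tau(x^* )=x^{**}(x^* )\ \text{for all } x^*\in X^*\}$. Here $H=A_u(B)$. *)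

From Stdlib Require Import Reals.
Open Scope R_scope.

Definition Cplx : Type := (R * R)%type.
Definition C0 : Cplx := (0, 0).
Definition C1 : Cplx := (1, 0).
Definition Cadd (a b : Cplx) : Cplx := (fst a + fst b, snd a + snd b).
Definition Copp (a : Cplx) : Cplx := (- fst a, - snd a).
Definition Csub (a b : Cplx) : Cplx := Cadd a (Copp b).
Definition Cmul (a b : Cplx) : Cplx :=
  (fst a * fst b - snd a * snd b, fst a * snd b + snd a * fst b).
Definition Cmod (a : Cplx) : R := sqrt (fst a * fst a + snd a * snd a).

Record CBanach := {
  car :> Type;
  vzero : car;
  vadd : car -> car -> car;
  vopp : car -> car;
  vscal : Cplx -> car -> car;
  vnorm : car -> R;
  vadd_assoc : forall x y z, vadd x (vadd y z) = vadd (vadd x y) z;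
  vadd_comm : forall x y, vadd x y = vadd y x;
  vadd_0 : forall x, vadd x vzero = x;
  vadd_opp : forall x, vadd x (vopp x) = vzero;
  vscal_assoc : forall a b x, vscal a (vscal b x) = vscal (Cmul a b) x;
  vscal_1 : forall x, vscal C1 x = x;
  vscal_distr_v : forall a x y, vscal a (vadd x y) = vadd (vscal a x) (vscal a y);
  vscal_distr_c : forall a b x, vscal (Cadd a b) x = vadd (vscal a x) (vscal b x);
  vnorm_nonneg : forall x, 0 <= vnorm x;
  vnorm_eq0 : forall x, vnorm x = 0 -> x = vzero;
  vnorm_scal : forall a x, vnorm (vscal a x) = Cmod a * vnorm x;
  vnorm_triangle : forall x y, vnorm (vadd x y) <= vnorm x + vnorm y;
  vcomplete : forall u : nat -> car,
    (forall eps, 0 < eps -> exists N, forall m n, (N <= m)%nat -> (N <= n)%nat ->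
        vnorm (vadd (u m) (vopp (u n))) < eps) ->
    exists l, forall eps, 0 < eps -> exists N, forall n, (N <= n)%nat ->
        vnorm (vadd (u n) (vopp l)) < eps
}.

Arguments vzero {_}. Arguments vadd {_}. Arguments vopp {_}.
Arguments vscal {_}. Arguments vnorm {_}.

Definition vsub {X : CBanach} (x y : X) : X := vadd x (vopp y).

Definition inB {X : CBanach} (x : X) : Prop := vnorm x < 1.

Definition Clinear_fun {X : CBanach} (L : X -> Cplx) : Prop :=
  (forall x y, L (vadd x y) = Cadd (L x) (L y)) /\
  (forall a x, L (vscal a x) = Cmul a (L x)).

Definition in_dual {X : CBanach} (L : X -> Cplx) : Prop :=
  Clinear_fun L /\ exists M, forall x, Cmod (L x) <= M * vnorm x.

Definition bounded_op {X : CBanach} (T : X -> X) : Prop :=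
  (forall x y, T (vadd x y) = vadd (T x) (T y)) /\
  (forall a x, T (vscal a x) = vscal a (T x)) /\
  (exists M, forall x, vnorm (T x) <= M * vnorm x).

Fixpoint lincomb {X : CBanach} (n : nat) (c : nat -> Cplx) (v : nat -> X) : X :=
  match n with
  | O => vzero
  | S k => vadd (lincomb k c v) (vscal (c k) (v k))
  end.

Definition finite_rank {X : CBanach} (T : X -> X) : Prop :=
  exists (n : nat) (v : nat -> X), forall x, exists c : nat -> Cplx, T x = lincomb n c v.

Definition op_norm_is {X : CBanach} (T : X -> X) (r : R) : Prop :=
  is_lub (fun t => exists x : X, vnorm x <= 1 /\ t = vnorm (T x)) r.

Definition holomorphic_on_B {X : CBanach} (f : X -> Cplx) : Prop :=
  forall x, inB x -> exists L : X -> Cplx, in_dual L /\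
    forall eps, 0 < eps -> exists delta, 0 < delta /\
      forall h, vnorm h < delta ->
        Cmod (Csub (Csub (f (vadd x h)) (f x)) (L h)) <= eps * vnorm h.

Definition bounded_on_B {X : CBanach} (f : X -> Cplx) : Prop :=
  exists M, forall x, inB x -> Cmod (f x) <= M.

Definition unif_cont_on_B {X : CBanach} (f : X -> Cplx) : Prop :=
  forall eps, 0 < eps -> exists delta, 0 < delta /\
    forall x y, inB x -> inB y -> vnorm (vsub x y) < delta ->
      Cmod (Csub (f x) (f y)) < eps.

(** f : X -> Cplx represents an element of A_u(B) (only its values on B matter) *)
Definition in_Au {X : CBanach} (f : X -> Cplx) : Prop :=
  bounded_on_B f /\ holomorphic_on_B f /\ unif_cont_on_B f.

(** * Spectrum M_{A_u(B)}: nonzero multiplicative linear functionals on A_u(B).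
    A functional is given on representatives X -> Cplx and must respect
    equality on B. *)
Definition character {X : CBanach} (tau : (X -> Cplx) -> Cplx) : Prop :=
  (forall f g, in_Au f -> in_Au g -> (forall x, inB x -> f x = g x) -> tau f = tau g) /\
  (forall f g, in_Au f -> in_Au g -> tau (fun x => Cadd (f x) (g x)) = Cadd (tau f) (tau g)) /\
  (forall a f, in_Au f -> tau (fun x => Cmul a (f x)) = Cmul a (tau f)) /\
  (forall f g, in_Au f -> in_Au g -> tau (fun x => Cmul (f x) (g x)) = Cmul (tau f) (tau g)) /\
  (exists f, in_Au f /\ tau f <> C0).

Definition in_fiber0 {X : CBanach} (tau : (X -> Cplx) -> Cplx) : Prop :=
  character tau /\ forall xs : X -> Cplx, in_dual xs -> tau xs = C0.

(** Write S x = sum_i l_i(x) w_i with l_i in X^* (coordinates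
   on a finite-dimensional subspace are bounded).  For r < 1 let f_r(x) = f(r x)
   and Q_t = I - t S, so Q_0 = I, Q_1 = P and ||Q_t|| <= 1 on [0,1].  Telescoping
   f_r along t = j/N and replacing each increment by difference quotients of f_r
   in the directions w_i gives, uniformly on B,
        f_r(x) - f_r(P x) = sum_i l_i(x) K_i(x) + (small error),   K_i in A_u(B),
   provided f is uniformly Frechet differentiable on the ball rB.  This is where
   complex analysis enters: Goursat's theorem for rectangles yields a Cauchy
   estimate |g'(0)| <= 4 sup |g|, so the derivatives of f are uniformly continuous
   on rB.  Since phi(l_i) = 0, phi annihilates sum_i l_i K_i; characters are
   contractive for the sup norm on B; and f_r -> f uniformly as r -> 1.  Hence
   f - f o P is a uniform limit of elements of the ideal generated by X^*, and
   phi(f - f o P) = 0. *)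

From Pilot Require Import Defs.
From Stdlib Require Import Reals Lra Lia Classical ClassicalEpsilon FunctionalExtensionality.
From Coquelicot Require Import Hierarchy RInt Continuity Derive RInt_analysis AutoDerive.
Require Coquelicot.Complex.
(* Coquelicot also exports a name C1; re-import Defs so that C1 is the complex unit. *)
Import Pilot.Defs.
Open Scope R_scope.

Ltac cdestr := repeat match goal with
  | a : Cplx |- _ => destruct a
  | a : (R * R)%type |- _ => destruct a
  end.
Ltac Ceq := intros; cdestr; unfold Csub, Cadd, Cmul, Copp, C0, C1 in *;
  apply injective_projections; simpl; ring.

Lemma Cadd_0_l a : Cadd C0 a = a. Proof. Ceq. Qed.
Lemma Cmul_comm a b : Cmul a b = Cmul b a. Proof. Ceq. Qed.
Lemma Cmul_assoc a b c : Cmul a (Cmul b c) = Cmul (Cmul a b) c. Proof. Ceq. Qed.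
Lemma Cmul_1_l a : Cmul C1 a = a. Proof. Ceq. Qed.
Lemma Cmul_1_r a : Cmul a C1 = a. Proof. Ceq. Qed.
Lemma Cmul_0_l a : Cmul C0 a = C0. Proof. Ceq. Qed.
Lemma Cmul_add_r a b c : Cmul a (Cadd b c) = Cadd (Cmul a b) (Cmul a c). Proof. Ceq. Qed.
Lemma Csub_diag a : Csub a a = C0. Proof. Ceq. Qed.

Lemma Cmod_eq a : Cmod a = Complex.Cmod a.
Proof. unfold Cmod, Complex.Cmod. f_equal. simpl. ring. Qed.
Lemma Cmod_nonneg a : 0 <= Cmod a.
Proof. apply sqrt_pos. Qed.
Lemma Cmod_mul a b : Cmod (Cmul a b) = Cmod a * Cmod b.
Proof. rewrite !Cmod_eq. apply Complex.Cmod_mult. Qed.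
Lemma Cmod_tri a b : Cmod (Cadd a b) <= Cmod a + Cmod b.
Proof. rewrite !Cmod_eq. apply Complex.Cmod_triangle. Qed.
Lemma Cmod_opp a : Cmod (Copp a) = Cmod a.
Proof. unfold Cmod, Copp. simpl. f_equal. ring. Qed.
Lemma Cmod_C0 : Cmod C0 = 0.
Proof. unfold Cmod, C0; simpl. replace (0*0+0*0) with 0 by ring. apply sqrt_0. Qed.
Lemma Cmod_C1 : Cmod C1 = 1.
Proof. unfold Cmod, C1; simpl. replace (1*1+0*0) with 1 by ring. apply sqrt_1. Qed.
Lemma Cmod_real r : Cmod (r, 0) = Rabs r.
Proof. unfold Cmod; simpl. replace (r*r+0*0) with (r*r) by ring. apply sqrt_Rsqr_abs. Qed.

Lemma Cmod_fst a : Rabs (fst a) <= Cmod a.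
Proof.
  unfold Cmod. rewrite <- sqrt_Rsqr_abs. apply sqrt_le_1_alt. unfold Rsqr.
  pose proof (Rle_0_sqr (snd a)). unfold Rsqr in H. lra.
Qed.
Lemma Cmod_snd a : Rabs (snd a) <= Cmod a.
Proof.
  unfold Cmod. rewrite <- sqrt_Rsqr_abs. apply sqrt_le_1_alt. unfold Rsqr.
  pose proof (Rle_0_sqr (fst a)). unfold Rsqr in H. lra.
Qed.
Lemma Cmod_le_sum a : Cmod a <= Rabs (fst a) + Rabs (snd a).
Proof.
  destruct a as [x y]. simpl.
  replace (x, y) with (Cadd (x, 0) (0, y)) by Ceq.
  eapply Rle_trans; [apply Cmod_tri|]. rewrite Cmod_real.
  replace (Cmod (0, y)) with (Rabs y); [lra|].
  unfold Cmod; simpl. rewrite <- sqrt_Rsqr_abs. f_equal. unfold Rsqr; ring.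
Qed.

Lemma Cmod_eq0 a : Cmod a = 0 -> a = C0.
Proof.
  intro H. pose proof (Cmod_fst a). pose proof (Cmod_snd a). destruct a as [x y].
  simpl in *. rewrite H in *. unfold C0. f_equal.
  - destruct (Req_dec x 0); auto. pose proof (Rabs_pos_lt x H2). lra.
  - destruct (Req_dec y 0); auto. pose proof (Rabs_pos_lt y H2). lra.
Qed.
Lemma Cmod_sub_sym a b : Cmod (Csub a b) = Cmod (Csub b a).
Proof. replace (Csub a b) with (Copp (Csub b a)) by Ceq. apply Cmod_opp. Qed.
Lemma Cmod_sub_le a b : Cmod (Csub a b) <= Cmod a + Cmod b.
Proof. unfold Csub. eapply Rle_trans; [apply Cmod_tri|]. rewrite Cmod_opp; lra. Qed.
Lemma Cmod_rev a b : Cmod a - Cmod b <= Cmod (Csub a b).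
Proof.
  replace a with (Cadd (Csub a b) b) at 1 by Ceq.
  pose proof (Cmod_tri (Csub a b) b). lra.
Qed.
Lemma Cmod_pos a : a <> C0 -> 0 < Cmod a.
Proof.
  intro H. destruct (Cmod_nonneg a) as [h|h]; auto.
  exfalso. apply H, Cmod_eq0; auto.
Qed.
Lemma C0_of_Cmod a : 0 < Cmod a -> a <> C0.
Proof. intros H E. subst. rewrite Cmod_C0 in H. lra. Qed.

Lemma dot_le (p q : Cplx) : fst p * fst q + snd p * snd q <= Cmod p * Cmod q.
Proof.
  destruct p as [p1 p2], q as [q1 q2]. simpl.
  pose proof (Cmod_fst (Cmul (p1, - p2) (q1, q2))) as H.
  rewrite Cmod_mul in H.
  replace (Cmod (p1, -p2)) with (Cmod (p1, p2)) in H by (unfold Cmod; simpl; f_equal; ring).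
  unfold Cmul in H; simpl in H. eapply Rle_trans; [|apply H].
  eapply Rle_trans; [|apply Rle_abs]. right; ring.
Qed.
Lemma Cmod_sq a : Cmod a * Cmod a = fst a * fst a + snd a * snd a.
Proof.
  unfold Cmod. rewrite sqrt_sqrt; auto.
  pose proof (Rle_0_sqr (fst a)); pose proof (Rle_0_sqr (snd a)); unfold Rsqr in *; lra.
Qed.

Definition Cinv (a : Cplx) : Cplx :=
  (fst a / (fst a * fst a + snd a * snd a), - snd a / (fst a * fst a + snd a * snd a)).

Lemma Cnorm2_pos a : a <> C0 -> 0 < fst a * fst a + snd a * snd a.
Proof.
  intro H. destruct a as [x y]; simpl.
  destruct (Req_dec x 0); destruct (Req_dec y 0); subst; [exfalso; apply H; reflexivity|nra..].
Qed.
Lemma Cmul_inv_r a : a <> C0 -> Cmul a (Cinv a) = C1.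
Proof.
  intro H. pose proof (Cnorm2_pos a H). destruct a as [x y]; simpl in *.
  unfold Cmul, Cinv, C1; simpl. f_equal; field; lra.
Qed.
Lemma Cmod_inv a : a <> C0 -> Cmod (Cinv a) = / Cmod a.
Proof.
  intro H. pose proof (Cmul_inv_r a H).
  assert (Cmod a * Cmod (Cinv a) = 1) by (rewrite <- Cmod_mul, H0; apply Cmod_C1).
  pose proof (Cmod_pos a H). field_simplify_eq; lra.
Qed.

Arguments vadd_assoc {_}. Arguments vadd_comm {_}. Arguments vadd_0 {_}.
Arguments vadd_opp {_}. Arguments vscal_assoc {_}. Arguments vscal_1 {_}.
Arguments vscal_distr_v {_}. Arguments vscal_distr_c {_}. Arguments vnorm_nonneg {_}.
Arguments vnorm_eq0 {_}. Arguments vnorm_scal {_}. Arguments vnorm_triangle {_}.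

Section VectorIdentities.
Context {X : CBanach}.
Implicit Types x y z h : X.

Lemma vadd_0l x : vadd vzero x = x.
Proof. rewrite vadd_comm. apply vadd_0. Qed.
Lemma vadd_cancel_r x y z : vadd x z = vadd y z -> x = y.
Proof.
  intro H. rewrite <- (vadd_0 x), <- (vadd_0 y), <- (vadd_opp z), !vadd_assoc, H.
  reflexivity.
Qed.
Lemma vscal_C0 x : vscal C0 x = vzero.
Proof.
  apply (vadd_cancel_r _ _ (vscal C0 x)). rewrite vadd_0l, <- vscal_distr_c.
  f_equal. Ceq.
Qed.
Lemma vscal_zero a : vscal a (@vzero X) = vzero.
Proof.
  apply (vadd_cancel_r _ _ (vscal a vzero)).
  rewrite vadd_0l, <- vscal_distr_v, vadd_0. reflexivity.
Qed.
Lemma vopp_scal x : vopp x = vscal (-1, 0) x.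
Proof.
  apply (vadd_cancel_r _ _ x). rewrite vadd_comm, vadd_opp.
  rewrite <- (vscal_1 x) at 2. rewrite <- vscal_distr_c, <- (vscal_C0 x). f_equal. Ceq.
Qed.
Lemma vnorm_zero : vnorm (@vzero X) = 0.
Proof. rewrite <- (vscal_C0 vzero), vnorm_scal, Cmod_C0. ring. Qed.
Lemma vnorm_opp x : vnorm (vopp x) = vnorm x.
Proof. rewrite vopp_scal, vnorm_scal, Cmod_real, Rabs_left by lra. ring. Qed.
Lemma vopp_opp x : vopp (vopp x) = x.
Proof.
  apply (vadd_cancel_r _ _ (vopp x)). rewrite vadd_opp, vadd_comm, vadd_opp. reflexivity.
Qed.
Lemma vopp_add x y : vopp (vadd x y) = vadd (vopp x) (vopp y).
Proof. rewrite !vopp_scal. apply vscal_distr_v. Qed.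
Lemma vadd_swap x y z : vadd (vadd x y) z = vadd (vadd x z) y.
Proof. rewrite <- !vadd_assoc, (vadd_comm y z). reflexivity. Qed.
Lemma vadd_4 x y z h : vadd (vadd x y) (vadd z h) = vadd (vadd x z) (vadd y h).
Proof. rewrite !vadd_assoc. f_equal. rewrite <- !vadd_assoc. f_equal. apply vadd_comm. Qed.

Lemma vsub_diag x : vsub x x = vzero.
Proof. apply vadd_opp. Qed.
Lemma vnorm_sub_sym x y : vnorm (vsub x y) = vnorm (vsub y x).
Proof. unfold vsub. rewrite <- vnorm_opp, vopp_add, vopp_opp, vadd_comm. reflexivity. Qed.
Lemma vsub_tri x y z : vnorm (vsub x z) <= vnorm (vsub x y) + vnorm (vsub y z).
Proof.
  replace (vsub x z) with (vadd (vsub x y) (vsub y z)); [apply vnorm_triangle|].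
  unfold vsub. rewrite <- vadd_assoc, (vadd_assoc (vopp y)), (vadd_comm (vopp y) y),
    vadd_opp, vadd_0l. reflexivity.
Qed.
Lemma vnorm_sub_le x y : vnorm (vsub x y) <= vnorm x + vnorm y.
Proof. unfold vsub. rewrite <- (vnorm_opp y). apply vnorm_triangle. Qed.
Lemma vadd_sub x y : vadd y (vsub x y) = x.
Proof.
  unfold vsub. rewrite vadd_comm, <- vadd_assoc, (vadd_comm (vopp y)), vadd_opp, vadd_0.
  reflexivity.
Qed.
Lemma vadd_vsub_cancel x y : vadd (vsub x y) y = x.
Proof. rewrite vadd_comm. apply vadd_sub. Qed.
Lemma vsub_add x y : vsub (vadd x y) x = y.
Proof. unfold vsub. rewrite (vadd_comm x y), <- vadd_assoc, vadd_opp, vadd_0. reflexivity. Qed.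
Lemma vsub_add_r x y h : vsub (vadd x h) (vadd y h) = vsub x y.
Proof.
  unfold vsub. rewrite vopp_add, <- vadd_assoc. f_equal.
  rewrite vadd_comm, <- vadd_assoc, (vadd_comm (vopp h)), vadd_opp, vadd_0. reflexivity.
Qed.
Lemma vsub_add_pair x y z h : vsub (vadd x y) (vadd z h) = vadd (vsub x z) (vsub y h).
Proof. unfold vsub. rewrite vopp_add. apply vadd_4. Qed.
Lemma vsub_sub_cancel y x z : vsub (vsub y x) (vsub y z) = vsub z x.
Proof.
  unfold vsub. rewrite vopp_add, vopp_opp, vadd_4, vadd_opp, vadd_0l. apply vadd_comm.
Qed.
Lemma vnorm_real_scal (r : R) x : vnorm (vscal (r, 0) x) = Rabs r * vnorm x.
Proof. rewrite vnorm_scal, Cmod_real. reflexivity. Qed.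
Lemma vscal_sub a x y : vscal a (vsub x y) = vsub (vscal a x) (vscal a y).
Proof. unfold vsub. rewrite vscal_distr_v, !vopp_scal, !vscal_assoc. do 2 f_equal. Ceq. Qed.
Lemma vsub_scal a b x : vsub (vscal a x) (vscal b x) = vscal (Csub a b) x.
Proof. unfold vsub, Csub. rewrite vscal_distr_c, vopp_scal, vscal_assoc. do 2 f_equal. Ceq. Qed.

End VectorIdentities.

Lemma lin_zero {X : CBanach} (T : X -> X) :
  (forall a x, T (vscal a x) = vscal a (T x)) -> T vzero = vzero.
Proof. intro H. rewrite <- (vscal_C0 vzero) at 1. rewrite H, vscal_C0. reflexivity. Qed.
Lemma lin_sub {X : CBanach} (T : X -> X) :
  (forall x y, T (vadd x y) = vadd (T x) (T y)) ->
  (forall a x, T (vscal a x) = vscal a (T x)) ->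
  forall x y, T (vsub x y) = vsub (T x) (T y).
Proof. intros H1 H2 x y. unfold vsub. rewrite H1, !vopp_scal, H2. reflexivity. Qed.

Lemma bounded_op_bound {X : CBanach} (T : X -> X) :
  bounded_op T -> exists M, 0 < M /\ forall x, vnorm (T x) <= M * vnorm x.
Proof.
  intros [_ [_ [M HM]]]. exists (Rmax M 1). split; [pose proof (Rmax_r M 1); lra|].
  intro x. eapply Rle_trans; [apply HM|].
  apply Rmult_le_compat_r; [apply vnorm_nonneg|apply Rmax_l].
Qed.
Lemma bounded_scal_op {X : CBanach} (c : Cplx) (T : X -> X) :
  bounded_op T -> bounded_op (fun x => vscal c (T x)).
Proof.
  intros [A [S [M HM]]]. split; [|split].
  - intros x y. rewrite A, vscal_distr_v. auto.
  - intros a x. rewrite S, !vscal_assoc, Cmul_comm. auto.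
  - exists (Cmod c * M). intro x. rewrite vnorm_scal, Rmult_assoc.
    apply Rmult_le_compat_l; [apply Cmod_nonneg|auto].
Qed.

Lemma dual_zero {X : CBanach} (L : X -> Cplx) : Clinear_fun L -> L vzero = C0.
Proof. intros [_ H]. rewrite <- (vscal_C0 vzero), H. Ceq. Qed.
Lemma dual_sub {X : CBanach} (L : X -> Cplx) :
  Clinear_fun L -> forall x y, L (vsub x y) = Csub (L x) (L y).
Proof. intros [H1 H2] x y. unfold vsub. rewrite H1, vopp_scal, H2. Ceq. Qed.
Lemma dual_bound {X : CBanach} (L : X -> Cplx) :
  in_dual L -> exists M, 0 < M /\ forall x, Cmod (L x) <= M * vnorm x.
Proof.
  intros [_ [M HM]]. exists (Rmax M 1). split; [pose proof (Rmax_r M 1); lra|].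
  intro x. eapply Rle_trans; [apply HM|].
  apply Rmult_le_compat_r; [apply vnorm_nonneg|apply Rmax_l].
Qed.

Section DualSpace.
Context {X : CBanach}.

Lemma dual_add (L1 L2 : X -> Cplx) :
  in_dual L1 -> in_dual L2 -> in_dual (fun h => Cadd (L1 h) (L2 h)).
Proof.
  intros H1 H2. destruct (dual_bound _ H1) as [M1 [_ B1]], (dual_bound _ H2) as [M2 [_ B2]].
  destruct H1 as [[A1 S1] _], H2 as [[A2 S2] _]. split; [split|].
  - intros x y. rewrite A1, A2. Ceq.
  - intros a x. rewrite S1, S2. Ceq.
  - exists (M1 + M2). intro x. eapply Rle_trans; [apply Cmod_tri|].
    specialize (B1 x); specialize (B2 x). lra.
Qed.
Lemma dual_scal (c : Cplx) (L : X -> Cplx) : in_dual L -> in_dual (fun h => Cmul c (L h)).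
Proof.
  intros H1. destruct (dual_bound _ H1) as [M1 [_ B1]]. destruct H1 as [[A1 S1] _].
  split; [split|].
  - intros x y. rewrite A1. Ceq.
  - intros a x. rewrite S1. Ceq.
  - exists (Cmod c * M1). intro x. rewrite Cmod_mul, Rmult_assoc.
    apply Rmult_le_compat_l; [apply Cmod_nonneg|apply B1].
Qed.
Lemma dual_zero_fun : in_dual (fun _ : X => C0).
Proof. split; [split|]; [intros; Ceq|intros; Ceq|]. exists 0. intro. rewrite Cmod_C0. lra. Qed.
Lemma dual_comp (L : X -> Cplx) (A : X -> X) :
  in_dual L -> bounded_op A -> in_dual (fun h => L (A h)).
Proof.
  intros H1 [HA1 [HA2 [MA HMA]]]. destruct (dual_bound _ H1) as [M1 [HM1 B1]].
  destruct H1 as [[A1 S1] _]. split; [split|].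
  - intros x y. rewrite HA1, A1. reflexivity.
  - intros a x. rewrite HA2, S1. reflexivity.
  - exists (M1 * MA). intro x. eapply Rle_trans; [apply B1|].
    rewrite Rmult_assoc. apply Rmult_le_compat_l; [lra|apply HMA].
Qed.

End DualSpace.

(** ** Frechet derivatives *)

Definition small_o {X : CBanach} (e : X -> Cplx) : Prop :=
  forall eps, 0 < eps -> exists delta, 0 < delta /\
    forall h, vnorm h < delta -> Cmod (e h) <= eps * vnorm h.

Definition fderiv {X : CBanach} (f : X -> Cplx) (x : X) (L : X -> Cplx) : Prop :=
  in_dual L /\ small_o (fun h => Csub (Csub (f (vadd x h)) (f x)) (L h)).

Definition near0_bounded {X : CBanach} (a : X -> Cplx) (C : R) : Prop :=
  exists delta, 0 < delta /\ forall h, vnorm h < delta -> Cmod (a h) <= C.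
Definition near0_lip {X : CBanach} (a : X -> Cplx) (K : R) : Prop :=
  0 < K /\ exists delta, 0 < delta /\ forall h, vnorm h < delta -> Cmod (a h) <= K * vnorm h.
Definition vanishes {X : CBanach} (a : X -> Cplx) : Prop :=
  forall eps, 0 < eps -> near0_bounded a eps.

Section LittleO.
Context {X : CBanach}.
Implicit Types (e a b : X -> Cplx) (h : X).

Lemma small_o_ext e e' : (forall h, e h = e' h) -> small_o e -> small_o e'.
Proof. intros E H. replace e' with e; auto. extensionality h; auto. Qed.

Lemma small_o_near e e' delta : 0 < delta -> (forall h, vnorm h < delta -> e h = e' h) ->
  small_o e -> small_o e'.
Proof.
  intros Hd E H eps He. destruct (H eps He) as [d [Hd' B]].
  exists (Rmin d delta). split; [apply Rmin_glb_lt; auto|]. intros h Hh.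
  rewrite <- E by (eapply Rlt_le_trans; [apply Hh|apply Rmin_r]).
  apply B. eapply Rlt_le_trans; [apply Hh|apply Rmin_l].
Qed.

Lemma small_o_zero e : (forall h, e h = C0) -> small_o e.
Proof.
  intros E eps He. exists 1. split; [lra|]. intros h _.
  rewrite E, Cmod_C0. pose proof (vnorm_nonneg h). nra.
Qed.

Lemma small_o_add e1 e2 : small_o e1 -> small_o e2 -> small_o (fun h => Cadd (e1 h) (e2 h)).
Proof.
  intros H1 H2 eps He.
  destruct (H1 (eps/2)) as [d1 [Hd1 E1]]; [lra|]. destruct (H2 (eps/2)) as [d2 [Hd2 E2]]; [lra|].
  exists (Rmin d1 d2). split; [apply Rmin_glb_lt; auto|]. intros h Hh.
  specialize (E1 h (Rlt_le_trans _ _ _ Hh (Rmin_l _ _))).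
  specialize (E2 h (Rlt_le_trans _ _ _ Hh (Rmin_r _ _))).
  eapply Rle_trans; [apply Cmod_tri|]. lra.
Qed.

Lemma small_o_mul_bounded a e C :
  near0_bounded a C -> small_o e -> small_o (fun h => Cmul (a h) (e h)).
Proof.
  intros [d1 [Hd1 Ba]] He eps Heps. set (C' := Rmax C 1).
  assert (HC' : 0 < C') by (unfold C'; pose proof (Rmax_r C 1); lra).
  destruct (He (eps / C')) as [d2 [Hd2 E]]; [apply Rdiv_lt_0_compat; lra|].
  exists (Rmin d1 d2). split; [apply Rmin_glb_lt; auto|]. intros h Hh.
  specialize (Ba h (Rlt_le_trans _ _ _ Hh (Rmin_l _ _))).
  specialize (E h (Rlt_le_trans _ _ _ Hh (Rmin_r _ _))).
  rewrite Cmod_mul. apply Rle_trans with (C' * (eps / C' * vnorm h)).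
  - apply Rmult_le_compat; auto using Cmod_nonneg. unfold C'. pose proof (Rmax_l C 1). lra.
  - right. field. lra.
Qed.

Lemma small_o_mul_vanish a b K :
  near0_lip a K -> vanishes b -> small_o (fun h => Cmul (a h) (b h)).
Proof.
  intros [HK [d1 [Hd1 La]]] Hb eps He.
  destruct (Hb (eps / K)) as [d2 [Hd2 Eb]]; [apply Rdiv_lt_0_compat; lra|].
  exists (Rmin d1 d2). split; [apply Rmin_glb_lt; auto|]. intros h Hh.
  specialize (La h (Rlt_le_trans _ _ _ Hh (Rmin_l _ _))).
  specialize (Eb h (Rlt_le_trans _ _ _ Hh (Rmin_r _ _))).
  rewrite Cmod_mul. apply Rle_trans with (K * vnorm h * (eps / K)).
  - apply Rmult_le_compat; auto using Cmod_nonneg.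
  - right. field. lra.
Qed.

Lemma vanishes_mul_bounded a b C :
  vanishes a -> near0_bounded b C -> vanishes (fun h => Cmul (a h) (b h)).
Proof.
  intros Ha [d1 [Hd1 Bb]] eps He. set (C' := Rmax C 1).
  assert (HC' : 0 < C') by (unfold C'; pose proof (Rmax_r C 1); lra).
  destruct (Ha (eps / C')) as [d2 [Hd2 Ea]]; [apply Rdiv_lt_0_compat; lra|].
  exists (Rmin d1 d2). split; [apply Rmin_glb_lt; auto|]. intros h Hh.
  specialize (Bb h (Rlt_le_trans _ _ _ Hh (Rmin_l _ _))).
  specialize (Ea h (Rlt_le_trans _ _ _ Hh (Rmin_r _ _))).
  rewrite Cmod_mul. apply Rle_trans with (eps / C' * C'); [|right; field; lra].
  apply Rmult_le_compat; auto using Cmod_nonneg. unfold C'. pose proof (Rmax_l C 1). lra.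
Qed.

Lemma lip_vanishes a K : near0_lip a K -> vanishes a.
Proof.
  intros [HK [d [Hd La]]] eps He. exists (Rmin d (eps / K)).
  split; [apply Rmin_glb_lt; auto; apply Rdiv_lt_0_compat; lra|]. intros h Hh.
  eapply Rle_trans; [apply La; eapply Rlt_le_trans; [apply Hh|apply Rmin_l]|].
  apply Rle_trans with (K * (eps / K)); [|right; field; lra].
  apply Rmult_le_compat_l; [lra|]. left. eapply Rlt_le_trans; [apply Hh|apply Rmin_r].
Qed.

Lemma small_o_comp {Y : CBanach} e (A : Y -> X) M : 0 < M -> (forall k, vnorm (A k) <= M * vnorm k) ->
  small_o e -> small_o (fun k => e (A k)).
Proof.
  intros HM HMA He eps Heps.
  destruct (He (eps / M)) as [d [Hd E]]; [apply Rdiv_lt_0_compat; lra|].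
  exists (d / M). split; [apply Rdiv_lt_0_compat; lra|]. intros k Hk.
  assert (vnorm (A k) < d).
  { eapply Rle_lt_trans; [apply HMA|]. apply (Rmult_lt_compat_l M) in Hk; auto.
    replace (M * (d / M)) with d in Hk by (field; lra). lra. }
  eapply Rle_trans; [apply E; auto|].
  replace (eps * vnorm k) with (eps / M * (M * vnorm k)) by (field; lra).
  apply Rmult_le_compat_l; [apply Rlt_le, Rdiv_lt_0_compat; lra|apply HMA].
Qed.

End LittleO.

Section FrechetCalculus.
Context {X : CBanach}.
Implicit Types (x h : X) (f g u : X -> Cplx).

Lemma fderiv_ext f x L L' : fderiv f x L -> (forall h, L h = L' h) -> fderiv f x L'.
Proof. intros H E. replace L' with L; auto. extensionality h; auto. Qed.

Lemma fderiv_lip f x L : fderiv f x L -> exists K, near0_lip (fun h => Csub (f (vadd x h)) (f x)) K.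
Proof.
  intros [HL H]. destruct (dual_bound L HL) as [M [HM HM']].
  destruct (H 1 Rlt_0_1) as [d [Hd Hd']]. exists (M + 1). split; [lra|]. exists d.
  split; auto. intros h Hh. specialize (Hd' h Hh). specialize (HM' h).
  replace (Csub (f (vadd x h)) (f x))
    with (Cadd (Csub (Csub (f (vadd x h)) (f x)) (L h)) (L h)) by Ceq.
  eapply Rle_trans; [apply Cmod_tri|]. lra.
Qed.

Lemma fderiv_const (a : Cplx) x : fderiv (fun _ => a) x (fun _ => C0).
Proof. split; [apply dual_zero_fun|]. apply small_o_zero. intros; Ceq. Qed.

Lemma fderiv_dual (L : X -> Cplx) x : in_dual L -> fderiv L x L.
Proof.
  intro H. split; auto. apply small_o_zero. intro h.
  destruct H as [[A _] _]. rewrite A. Ceq.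
Qed.

Lemma fderiv_add f g x L1 L2 : fderiv f x L1 -> fderiv g x L2 ->
  fderiv (fun y => Cadd (f y) (g y)) x (fun h => Cadd (L1 h) (L2 h)).
Proof.
  intros [H1 D1] [H2 D2]. split; [apply dual_add; auto|].
  eapply small_o_ext; [|apply (small_o_add _ _ D1 D2)]. intro h. Ceq.
Qed.

Lemma fderiv_scal (c : Cplx) f x L : fderiv f x L ->
  fderiv (fun y => Cmul c (f y)) x (fun h => Cmul c (L h)).
Proof.
  intros [H1 D1]. split; [apply dual_scal; auto|].
  assert (Hc : near0_bounded (fun _ : X => c) (Cmod c)) by (exists 1; split; [lra|intros; lra]).
  eapply small_o_ext; [|apply (small_o_mul_bounded _ _ _ Hc D1)]. intro h. Ceq.
Qed.

Lemma fderiv_sub f g x L1 L2 : fderiv f x L1 -> fderiv g x L2 ->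
  fderiv (fun y => Csub (f y) (g y)) x (fun h => Csub (L1 h) (L2 h)).
Proof.
  intros H1 H2. pose proof (fderiv_add _ _ _ _ _ H1 (fderiv_scal (-1, 0) _ _ _ H2)) as H.
  replace (fun y => Csub (f y) (g y)) with (fun y => Cadd (f y) (Cmul (-1, 0) (g y)))
    by (extensionality y; Ceq).
  eapply fderiv_ext; [apply H|]. intro h. Ceq.
Qed.

(** Product rule: the remainder of [f g] is f(x) r_g + g(x) r_f + (Delta f)(Delta g). *)
Lemma fderiv_mul f g x L1 L2 : fderiv f x L1 -> fderiv g x L2 ->
  fderiv (fun y => Cmul (f y) (g y)) x (fun h => Cadd (Cmul (f x) (L2 h)) (Cmul (g x) (L1 h))).
Proof.
  intros F G. destruct (fderiv_lip _ _ _ F) as [K1 Lf]. destruct (fderiv_lip _ _ _ G) as [K2 Lg].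
  destruct F as [H1 D1], G as [H2 D2]. split; [apply dual_add; apply dual_scal; auto|].
  assert (Hc : forall c : Cplx, near0_bounded (fun _ : X => c) (Cmod c))
    by (intro c; exists 1; split; [lra|intros; lra]).
  eapply small_o_ext;
    [|apply small_o_add; [apply small_o_add|];
      [apply (small_o_mul_bounded _ _ _ (Hc (f x)) D2)
      |apply (small_o_mul_bounded _ _ _ (Hc (g x)) D1)
      |apply (small_o_mul_vanish _ _ _ Lf (lip_vanishes _ _ Lg))]].
  intro h. Ceq.
Qed.

Lemma inv_ident a b l : a <> C0 -> b <> C0 ->
  Csub (Csub (Cinv a) (Cinv b)) (Cmul (Copp (Cmul (Cinv b) (Cinv b))) l) =
  Cadd (Cmul (Copp (Cmul (Cinv a) (Cinv b))) (Csub (Csub a b) l))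
       (Cmul l (Cmul (Csub a b) (Cmul (Cinv a) (Cmul (Cinv b) (Cinv b))))).
Proof.
  intros Ha Hb. pose proof (Cnorm2_pos a Ha). pose proof (Cnorm2_pos b Hb).
  destruct a as [a1 a2], b as [b1 b2], l as [l1 l2]. simpl in *.
  unfold Csub, Cadd, Cmul, Copp, Cinv; simpl. f_equal; field; lra.
Qed.

Lemma nonvanishing_near u x L : u x <> C0 -> fderiv u x L ->
  exists delta, 0 < delta /\ forall h, vnorm h < delta -> Cmod (u x) / 2 <= Cmod (u (vadd x h)).
Proof.
  intros Hu F. destruct (fderiv_lip _ _ _ F) as [K Lu].
  destruct (lip_vanishes _ _ Lu (Cmod (u x) / 2)) as [d [Hd Bd]]; [pose proof (Cmod_pos _ Hu); lra|].
  exists d. split; auto. intros h Hh. specialize (Bd h Hh). rewrite Cmod_sub_sym in Bd.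
  pose proof (Cmod_rev (u x) (u (vadd x h))). lra.
Qed.

(** Quotient rule for 1/u; [inv_ident] splits the remainder into a bounded
    multiple of the remainder of u plus O(||h||) times a vanishing term. *)
Lemma fderiv_inv u x L : u x <> C0 -> fderiv u x L ->
  fderiv (fun y => Cinv (u y)) x (fun h => Cmul (Copp (Cmul (Cinv (u x)) (Cinv (u x)))) (L h)).
Proof.
  intros Hu F. destruct (nonvanishing_near u x L Hu F) as [d [Hd Hnear]].
  destruct (fderiv_lip _ _ _ F) as [K Lu]. pose proof F as [HL D].
  destruct (dual_bound _ HL) as [M [HM BM]].
  set (m := Cmod (u x)). assert (Hm : 0 < m) by (apply Cmod_pos; auto).
  assert (Hne : forall h, vnorm h < d -> u (vadd x h) <> C0)
    by (intros h Hh; apply C0_of_Cmod; specialize (Hnear h Hh); fold m in Hnear; lra).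
  assert (Hinv : forall h, vnorm h < d -> Cmod (Cinv (u (vadd x h))) <= 2 / m).
  { intros h Hh. rewrite Cmod_inv by auto. specialize (Hnear h Hh). fold m in Hnear.
    replace (2 / m) with (/ (m / 2)) by (field; lra). apply Rinv_le_contravar; lra. }
  assert (Hinvx : Cmod (Cinv (u x)) = / m) by (apply Cmod_inv; auto).
  assert (Him : 0 < / m) by (apply Rinv_0_lt_compat; auto).
  split; [apply dual_scal; auto|].
  eapply small_o_near; [apply Hd|intros h Hh; symmetry; apply inv_ident; auto|].
  apply small_o_add.
  - apply (small_o_mul_bounded _ _ (2 / m * / m)); [|exact D].
    exists d. split; auto. intros h Hh. rewrite Cmod_opp, Cmod_mul, Hinvx.
    apply Rmult_le_compat_r; [lra|auto].
  - apply (small_o_mul_vanish _ _ M); [split; auto; exists 1; split; [lra|intros; apply BM]|].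
    apply (vanishes_mul_bounded _ _ (2 / m * (/ m * / m))); [apply (lip_vanishes _ _ Lu)|].
    exists d. split; auto. intros h Hh. rewrite !Cmod_mul, Hinvx.
    apply Rmult_le_compat_r; [apply Rmult_le_pos; lra|auto].
Qed.

Lemma fderiv_comp_affine f (A : X -> X) (b : X) x L : bounded_op A ->
  fderiv f (vadd (A x) b) L -> fderiv (fun y => f (vadd (A y) b)) x (fun h => L (A h)).
Proof.
  intros HA [HL D]. pose proof HA as [A1 _]. split; [apply dual_comp; auto|].
  destruct (bounded_op_bound A HA) as [M [HM HMA]].
  eapply small_o_ext; [|apply (small_o_comp _ A M HM HMA D)]. intro h. cbv beta.
  rewrite A1, vadd_swap. reflexivity.
Qed.

End FrechetCalculus.

Fixpoint csum (n : nat) (c : nat -> Cplx) : Cplx :=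
  match n with O => C0 | S k => Cadd (csum k c) (c k) end.
Fixpoint rsum (n : nat) (f : nat -> R) : R :=
  match n with O => 0 | S k => rsum k f + f k end.

Lemma csum_ext n c c' : (forall i, (i < n)%nat -> c i = c' i) -> csum n c = csum n c'.
Proof. induction n; simpl; intros; auto. rewrite IHn, H; auto. Qed.
Lemma csum_add n c c' : csum n (fun i => Cadd (c i) (c' i)) = Cadd (csum n c) (csum n c').
Proof. induction n; simpl; [Ceq|]. rewrite IHn. Ceq. Qed.
Lemma csum_sub n c c' : csum n (fun i => Csub (c i) (c' i)) = Csub (csum n c) (csum n c').
Proof. induction n; simpl; [Ceq|]. rewrite IHn. Ceq. Qed.
Lemma csum_scal n a c : csum n (fun i => Cmul a (c i)) = Cmul a (csum n c).
Proof. induction n; simpl; [Ceq|]. rewrite IHn. Ceq. Qed.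
Lemma csum_zero n : csum n (fun _ => C0) = C0.
Proof. induction n; simpl; auto. rewrite IHn. Ceq. Qed.
Lemma csum_exch n m (c : nat -> nat -> Cplx) :
  csum n (fun i => csum m (fun j => c i j)) = csum m (fun j => csum n (fun i => c i j)).
Proof. induction n; simpl; [rewrite csum_zero; auto|]. rewrite IHn, <- csum_add. auto. Qed.
Lemma csum_tele n (a : nat -> Cplx) : csum n (fun j => Csub (a j) (a (S j))) = Csub (a O) (a n).
Proof. induction n; simpl; [Ceq|]. rewrite IHn. Ceq. Qed.
Lemma csum_bound n c : Cmod (csum n c) <= rsum n (fun i => Cmod (c i)).
Proof. induction n; simpl; [rewrite Cmod_C0; lra|]. eapply Rle_trans; [apply Cmod_tri|lra]. Qed.

Lemma rsum_le m f g : (forall i, (i < m)%nat -> f i <= g i) -> rsum m f <= rsum m g.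
Proof.
  induction m; simpl; intros; [lra|].
  pose proof (H m ltac:(lia)). pose proof (IHm ltac:(intros; apply H; lia)). lra.
Qed.
Lemma rsum_nonneg m f : (forall i, 0 <= f i) -> 0 <= rsum m f.
Proof. induction m; simpl; intros H; [lra|]. pose proof (H m). pose proof (IHm H). lra. Qed.
Lemma rsum_scal m a f : rsum m (fun i => a * f i) = a * rsum m f.
Proof. induction m; simpl; [ring|]. rewrite IHm. ring. Qed.
Lemma rsum_const n a : rsum n (fun _ => a) = INR n * a.
Proof. induction n; simpl; [ring|]. rewrite IHn. destruct n; simpl; ring. Qed.
Lemma rsum_term m f i : (forall k, 0 <= f k) -> (i < m)%nat -> f i <= rsum m f.
Proof.
  induction m; intros H Hi; [lia|]. simpl. destruct (Nat.eq_dec i m).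
  - subst. pose proof (rsum_nonneg m f H). lra.
  - pose proof (IHm H ltac:(lia)). pose proof (H m). lra.
Qed.

Section LinearCombinations.
Context {X : CBanach}.
Implicit Types (w : nat -> X) (c : nat -> Cplx).

Lemma lincomb_ext m c c' w w' : (forall i, (i < m)%nat -> c i = c' i /\ w i = w' i) ->
  lincomb m c w = lincomb m c' w'.
Proof. induction m; simpl; intros H; auto. destruct (H m ltac:(lia)) as [-> ->]. rewrite IHm; auto. Qed.
Lemma lincomb_add m c c' w :
  lincomb m (fun i => Cadd (c i) (c' i)) w = vadd (lincomb m c w) (lincomb m c' w).
Proof. induction m; simpl; [rewrite vadd_0; auto|]. rewrite IHm, vscal_distr_c. apply vadd_4. Qed.
Lemma lincomb_scal m a c w : lincomb m (fun i => Cmul a (c i)) w = vscal a (lincomb m c w).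
Proof. induction m; simpl; [rewrite vscal_zero; auto|]. rewrite IHm, vscal_distr_v, vscal_assoc. auto. Qed.
Lemma lincomb_sub m c c' w :
  lincomb m (fun i => Csub (c i) (c' i)) w = vsub (lincomb m c w) (lincomb m c' w).
Proof.
  unfold Csub. rewrite lincomb_add. unfold vsub. f_equal. rewrite vopp_scal, <- lincomb_scal.
  apply lincomb_ext. intros. split; auto. Ceq.
Qed.
Lemma lincomb_norm m c w : vnorm (lincomb m c w) <= rsum m (fun i => Cmod (c i) * vnorm (w i)).
Proof.
  induction m; simpl; [rewrite vnorm_zero; lra|].
  eapply Rle_trans; [apply vnorm_triangle|]. rewrite vnorm_scal. lra.
Qed.
Lemma dual_lincomb (L : X -> Cplx) m c w : Clinear_fun L ->
  L (lincomb m c w) = csum m (fun i => Cmul (c i) (L (w i))).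
Proof. intro HL. induction m; simpl; [apply dual_zero; auto|]. destruct HL as [A S]. rewrite A, S, IHm. auto. Qed.

End LinearCombinations.

(** ** The algebra A_u(B) *)

Section AuAlgebra.
Context {X : CBanach}.
Implicit Types (f g u : X -> Cplx).

Lemma holo_iff f : holomorphic_on_B f <-> forall x, inB x -> exists L, fderiv f x L.
Proof. unfold holomorphic_on_B, fderiv, small_o. tauto. Qed.

Lemma bounded_on_B_nonneg f : bounded_on_B f -> exists M, 0 <= M /\ forall x, inB x -> Cmod (f x) <= M.
Proof.
  intros [M HM]. exists (Rmax M 0). split; [apply Rmax_r|].
  intros x Hx. eapply Rle_trans; [apply HM; auto|apply Rmax_l].
Qed.

Lemma in_Au_const a : in_Au (fun _ : X => a).
Proof.
  split; [|split].
  - exists (Cmod a). intros; lra.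
  - apply holo_iff. intros x _. exists (fun _ => C0). apply fderiv_const.
  - intros eps He. exists 1. split; [lra|]. intros. rewrite Csub_diag, Cmod_C0. lra.
Qed.

Lemma in_Au_add f g : in_Au f -> in_Au g -> in_Au (fun x => Cadd (f x) (g x)).
Proof.
  intros [[Mf Bf] [Hf Uf]] [[Mg Bg] [Hg Ug]]. split; [|split].
  - exists (Mf + Mg). intros x Hx. eapply Rle_trans; [apply Cmod_tri|].
    specialize (Bf x Hx); specialize (Bg x Hx). lra.
  - apply holo_iff. intros x Hx. apply holo_iff in Hf, Hg.
    destruct (Hf x Hx) as [L1 H1], (Hg x Hx) as [L2 H2]. eexists. apply fderiv_add; eauto.
  - intros eps He. destruct (Uf (eps/2)) as [d1 [Hd1 U1]]; [lra|].
    destruct (Ug (eps/2)) as [d2 [Hd2 U2]]; [lra|].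
    exists (Rmin d1 d2). split; [apply Rmin_glb_lt; auto|]. intros x y Hx Hy Hxy.
    specialize (U1 x y Hx Hy (Rlt_le_trans _ _ _ Hxy (Rmin_l _ _))).
    specialize (U2 x y Hx Hy (Rlt_le_trans _ _ _ Hxy (Rmin_r _ _))).
    replace (Csub (Cadd (f x) (g x)) (Cadd (f y) (g y)))
      with (Cadd (Csub (f x) (f y)) (Csub (g x) (g y))) by Ceq.
    eapply Rle_lt_trans; [apply Cmod_tri|lra].
Qed.

(** Products of bounded uniformly continuous functions are uniformly continuous:
    fg(x) - fg(y) = f(x)(g(x) - g(y)) + g(y)(f(x) - f(y)). *)
Lemma unif_cont_mul f g Mf Mg : 0 <= Mf -> 0 <= Mg ->
  (forall x, inB x -> Cmod (f x) <= Mf) -> (forall x, inB x -> Cmod (g x) <= Mg) ->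
  unif_cont_on_B f -> unif_cont_on_B g -> unif_cont_on_B (fun x => Cmul (f x) (g x)).
Proof.
  intros HMf HMg Bf Bg Uf Ug eps He. set (A := Mf + Mg + 1).
  destruct (Uf (eps/A)) as [d1 [Hd1 U1]]; [apply Rdiv_lt_0_compat; unfold A; lra|].
  destruct (Ug (eps/A)) as [d2 [Hd2 U2]]; [apply Rdiv_lt_0_compat; unfold A; lra|].
  exists (Rmin d1 d2). split; [apply Rmin_glb_lt; auto|]. intros x y Hx Hy Hxy.
  specialize (U1 x y Hx Hy (Rlt_le_trans _ _ _ Hxy (Rmin_l _ _))).
  specialize (U2 x y Hx Hy (Rlt_le_trans _ _ _ Hxy (Rmin_r _ _))).
  replace (Csub (Cmul (f x) (g x)) (Cmul (f y) (g y)))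
    with (Cadd (Cmul (f x) (Csub (g x) (g y))) (Cmul (g y) (Csub (f x) (f y)))) by Ceq.
  eapply Rle_lt_trans; [apply Cmod_tri|]. rewrite !Cmod_mul.
  assert (Cmod (f x) * Cmod (Csub (g x) (g y)) <= Mf * (eps / A))
    by (apply Rmult_le_compat; auto using Cmod_nonneg; lra).
  assert (Cmod (g y) * Cmod (Csub (f x) (f y)) <= Mg * (eps / A))
    by (apply Rmult_le_compat; auto using Cmod_nonneg; lra).
  assert ((Mf + Mg) * (eps / A) < eps).
  { replace eps with (A * (eps / A)) at 2 by (field; unfold A; lra).
    apply Rmult_lt_compat_r; [apply Rdiv_lt_0_compat|]; unfold A; lra. }
  lra.
Qed.

Lemma in_Au_mul f g : in_Au f -> in_Au g -> in_Au (fun x => Cmul (f x) (g x)).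
Proof.
  intros [Bf [Hf Uf]] [Bg [Hg Ug]].
  destruct (bounded_on_B_nonneg f Bf) as [Mf [HMf Bf']].
  destruct (bounded_on_B_nonneg g Bg) as [Mg [HMg Bg']]. split; [|split].
  - exists (Mf * Mg). intros x Hx. rewrite Cmod_mul.
    apply Rmult_le_compat; auto using Cmod_nonneg.
  - apply holo_iff. intros x Hx. apply holo_iff in Hf, Hg.
    destruct (Hf x Hx) as [L1 H1], (Hg x Hx) as [L2 H2]. eexists. apply fderiv_mul; eauto.
  - apply (unif_cont_mul f g Mf Mg); auto.
Qed.

Lemma in_Au_scal a f : in_Au f -> in_Au (fun x : X => Cmul a (f x)).
Proof. intro. apply (in_Au_mul (fun _ => a) f); auto. apply in_Au_const. Qed.

Lemma in_Au_sub f g : in_Au f -> in_Au g -> in_Au (fun x : X => Csub (f x) (g x)).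
Proof.
  intros. replace (fun x => Csub (f x) (g x)) with (fun x => Cadd (f x) (Cmul (-1,0) (g x)))
    by (extensionality x; Ceq).
  apply in_Au_add; auto. apply in_Au_scal; auto.
Qed.

Lemma in_Au_csum n (G : nat -> X -> Cplx) : (forall i, (i < n)%nat -> in_Au (G i)) ->
  in_Au (fun x => csum n (fun i => G i x)).
Proof. induction n; simpl; intros H; [apply in_Au_const|]. apply in_Au_add; [apply IHn; auto|apply H; lia]. Qed.

Lemma in_Au_dual (L : X -> Cplx) : in_dual L -> in_Au L.
Proof.
  intro HL. destruct (dual_bound _ HL) as [M [HM BM]]. split; [|split].
  - exists M. intros x Hx. eapply Rle_trans; [apply BM|].
    unfold inB in Hx. pose proof (vnorm_nonneg x). nra.
  - apply holo_iff. intros x _. exists L. apply fderiv_dual; auto.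
  - intros eps He. exists (eps / M). split; [apply Rdiv_lt_0_compat; lra|]. intros x y _ _ Hxy.
    destruct HL as [HL _]. rewrite <- dual_sub; auto. eapply Rle_lt_trans; [apply BM|].
    apply (Rmult_lt_compat_l M) in Hxy; auto.
    replace (M * (eps / M)) with eps in Hxy by (field; lra). auto.
Qed.

Lemma in_Au_comp_affine f (A : X -> X) (b : X) : bounded_op A ->
  (forall x, inB x -> inB (vadd (A x) b)) -> in_Au f -> in_Au (fun y => f (vadd (A y) b)).
Proof.
  intros HA HT [[Mf Bf] [Hf Uf]]. pose proof HA as [A1 [A2 _]].
  destruct (bounded_op_bound A HA) as [M [HM HMA]]. split; [|split].
  - exists Mf. intros x Hx. apply Bf. auto.
  - apply holo_iff. apply holo_iff in Hf. intros x Hx. destruct (Hf _ (HT x Hx)) as [L HL].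
    eexists. apply fderiv_comp_affine; eauto.
  - intros eps He. destruct (Uf eps He) as [d [Hd U]].
    exists (d / M). split; [apply Rdiv_lt_0_compat; lra|].
    intros x y Hx Hy Hxy. apply U; auto. rewrite vsub_add_r, <- lin_sub; auto.
    eapply Rle_lt_trans; [apply HMA|]. apply (Rmult_lt_compat_l M) in Hxy; auto.
    replace (M * (d / M)) with d in Hxy by (field; lra). auto.
Qed.

Lemma in_Au_comp_lin f (A : X -> X) : bounded_op A -> (forall x, inB x -> inB (A x)) ->
  in_Au f -> in_Au (fun x => f (A x)).
Proof.
  intros HA HB Hf. replace (fun x => f (A x)) with (fun x => f (vadd (A x) vzero))
    by (extensionality x; rewrite vadd_0; auto).
  apply in_Au_comp_affine; auto. intros x Hx. rewrite vadd_0. auto.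
Qed.

Lemma in_Au_inv u m : 0 < m -> (forall x, inB x -> m <= Cmod (u x)) -> in_Au u ->
  in_Au (fun x => Cinv (u x)).
Proof.
  intros Hm Hb [[Mu Bu] [Hu Uu]].
  assert (Hne : forall x, inB x -> u x <> C0)
    by (intros x Hx; apply C0_of_Cmod; specialize (Hb x Hx); lra).
  assert (Hinv : forall x, inB x -> Cmod (Cinv (u x)) <= / m)
    by (intros x Hx; rewrite Cmod_inv; auto; apply Rinv_le_contravar; auto).
  split; [|split].
  - exists (/ m). auto.
  - apply holo_iff. apply holo_iff in Hu. intros x Hx. destruct (Hu x Hx) as [L HL].
    eexists. apply fderiv_inv; eauto.
  - intros eps He. destruct (Uu (eps * m * m)) as [d [Hd U]]; [repeat apply Rmult_lt_0_compat; lra|].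
    exists d. split; auto. intros x y Hx Hy Hxy. specialize (U x y Hx Hy Hxy).
    replace (Csub (Cinv (u x)) (Cinv (u y)))
      with (Cmul (Csub (u y) (u x)) (Cmul (Cinv (u x)) (Cinv (u y)))).
    2:{ pose proof (Cnorm2_pos _ (Hne x Hx)). pose proof (Cnorm2_pos _ (Hne y Hy)).
        destruct (u x) as [a1 a2], (u y) as [b1 b2]. simpl in *.
        unfold Csub, Cadd, Cmul, Copp, Cinv; simpl. f_equal; field; lra. }
    rewrite !Cmod_mul, Cmod_sub_sym.
    apply Rle_lt_trans with (Cmod (Csub (u x) (u y)) * (/ m * / m)).
    + apply Rmult_le_compat_l; [apply Cmod_nonneg|].
      apply Rmult_le_compat; auto using Cmod_nonneg.
    + apply Rlt_le_trans with (eps * m * m * (/m * /m)); [|right; field; lra].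
      apply Rmult_lt_compat_r; auto. apply Rmult_lt_0_compat; apply Rinv_0_lt_compat; lra.
Qed.

End AuAlgebra.

(** ** Characters of A_u(B) *)

Section Characters.
Context {X : CBanach}.
Variable phi : (X -> Cplx) -> Cplx.
Hypothesis Hphi : character phi.
Implicit Types (f g : X -> Cplx).

Lemma phi_ext f g : in_Au f -> in_Au g -> (forall x, inB x -> f x = g x) -> phi f = phi g.
Proof. destruct Hphi as [H _]. apply H. Qed.
Lemma phi_add f g : in_Au f -> in_Au g -> phi (fun x => Cadd (f x) (g x)) = Cadd (phi f) (phi g).
Proof. destruct Hphi as [_ [H _]]. apply H. Qed.
Lemma phi_scal a f : in_Au f -> phi (fun x => Cmul a (f x)) = Cmul a (phi f).
Proof. destruct Hphi as [_ [_ [H _]]]. apply H. Qed.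
Lemma phi_mul f g : in_Au f -> in_Au g -> phi (fun x => Cmul (f x) (g x)) = Cmul (phi f) (phi g).
Proof. destruct Hphi as [_ [_ [_ [H _]]]]. apply H. Qed.

Lemma phi_one : phi (fun _ => C1) = C1.
Proof.
  destruct Hphi as [_ [_ [_ [Hm [f [Hf Hn]]]]]].
  pose proof (Hm (fun _ => C1) f (in_Au_const C1) Hf) as H. cbv beta in H.
  replace (phi (fun x => Cmul C1 (f x))) with (phi f) in H
    by (f_equal; extensionality x; symmetry; apply Cmul_1_l).
  set (a := phi (fun _ => C1)) in *. set (b := phi f) in *.
  assert (Cmul (Cmul a b) (Cinv b) = Cmul b (Cinv b)) by (rewrite <- H; reflexivity).
  rewrite <- Cmul_assoc, Cmul_inv_r, Cmul_1_r in H0 by auto. auto.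
Qed.

Lemma phi_const a : phi (fun _ => a) = a.
Proof.
  replace (fun _ : X => a) with (fun x : X => Cmul a ((fun _ => C1) x))
    by (extensionality x; apply Cmul_1_r).
  rewrite phi_scal, phi_one; [apply Cmul_1_r|apply in_Au_const].
Qed.

Lemma phi_sub f g : in_Au f -> in_Au g -> phi (fun x => Csub (f x) (g x)) = Csub (phi f) (phi g).
Proof.
  intros. replace (fun x => Csub (f x) (g x)) with (fun x => Cadd (f x) (Cmul (-1,0) (g x)))
    by (extensionality x; Ceq).
  rewrite phi_add, phi_scal; auto; [Ceq|apply in_Au_scal; auto].
Qed.

Lemma phi_csum n (G : nat -> X -> Cplx) : (forall i, (i < n)%nat -> in_Au (G i)) ->
  phi (fun x => csum n (fun i => G i x)) = csum n (fun i => phi (G i)).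
Proof.
  induction n; simpl; intros H; [apply phi_const|].
  rewrite phi_add, IHn; auto; try (apply in_Au_csum; auto); apply H; lia.
Qed.

(** Characters are contractive for the sup norm on B: if |phi g| > M >= |g| on B,
    then g - phi(g) would be invertible in A_u(B) although phi kills it. *)
Lemma phi_bound g M : in_Au g -> (forall x, inB x -> Cmod (g x) <= M) -> Cmod (phi g) <= M.
Proof.
  intros Hg HM. destruct (Rle_dec (Cmod (phi g)) M) as [h|h]; auto. exfalso.
  set (l := phi g) in *. set (u := fun x => Csub l (g x)).
  assert (Hu : in_Au u) by (apply in_Au_sub; auto; apply in_Au_const).
  assert (Hb : forall x, inB x -> Cmod l - M <= Cmod (u x)).
  { intros x Hx. unfold u. pose proof (Cmod_rev l (g x)). specialize (HM x Hx). lra. }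
  assert (Hk : in_Au (fun x => Cinv (u x))) by (apply (in_Au_inv u (Cmod l - M)); auto; lra).
  assert (E1 : phi (fun x => Cmul (u x) (Cinv (u x))) = phi (fun _ => C1)).
  { apply phi_ext; [apply in_Au_mul; auto|apply in_Au_const|]. intros x Hx.
    apply Cmul_inv_r, C0_of_Cmod. specialize (Hb x Hx). lra. }
  assert (E2 : phi u = C0) by (unfold u; rewrite phi_sub, phi_const; [apply Csub_diag|apply in_Au_const|auto]).
  rewrite phi_mul, phi_one, E2, Cmul_0_l in E1; auto.
  unfold C0, C1 in E1. injection E1. lra.
Qed.

End Characters.

Lemma C_complete : forall u : nat -> Cplx,
  (forall eps, 0 < eps -> exists N, forall m n, (N <= m)%nat -> (N <= n)%nat ->
      Cmod (Cadd (u m) (Copp (u n))) < eps) ->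
  exists l, forall eps, 0 < eps -> exists N, forall n, (N <= n)%nat ->
      Cmod (Cadd (u n) (Copp l)) < eps.
Proof.
  intros u Hu.
  assert (Cauchy_fst : Cauchy_crit (fun n => fst (u n))).
  { intros e He. destruct (Hu e He) as [N HN]. exists N. intros n m Hn Hm. unfold Rdist.
    pose proof (Cmod_fst (Cadd (u n) (Copp (u m)))) as H. specialize (HN n m Hn Hm). simpl in H.
    eapply Rle_lt_trans; [|apply HN].
    replace (fst (u n) - fst (u m)) with (fst (u n) + - fst (u m)) by ring. auto. }
  assert (Cauchy_snd : Cauchy_crit (fun n => snd (u n))).
  { intros e He. destruct (Hu e He) as [N HN]. exists N. intros n m Hn Hm. unfold Rdist.
    pose proof (Cmod_snd (Cadd (u n) (Copp (u m)))) as H. specialize (HN n m Hn Hm). simpl in H.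
    eapply Rle_lt_trans; [|apply HN].
    replace (snd (u n) - snd (u m)) with (snd (u n) + - snd (u m)) by ring. auto. }
  destruct (Rcomplete.R_complete _ Cauchy_fst) as [l1 H1], (Rcomplete.R_complete _ Cauchy_snd) as [l2 H2].
  exists (l1, l2). intros e He.
  destruct (H1 (e/2)) as [N1 HN1]; [lra|]. destruct (H2 (e/2)) as [N2 HN2]; [lra|].
  exists (Nat.max N1 N2). intros n Hn. eapply Rle_lt_trans; [apply Cmod_le_sum|].
  specialize (HN1 n ltac:(lia)). specialize (HN2 n ltac:(lia)).
  unfold Rdist in *. simpl. unfold Rminus in *. lra.
Qed.

Definition CC : CBanach.
Proof.
  refine {| car := Cplx; vzero := C0; vadd := Cadd; vopp := Copp; vscal := Cmul; vnorm := Cmod |};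
    try (intros; Ceq).
  - apply Cmod_nonneg.
  - apply Cmod_eq0.
  - apply Cmod_mul.
  - apply Cmod_tri.
  - apply C_complete.
Defined.

Definition fderivC (g : Cplx -> Cplx) (z : Cplx) (L : Cplx -> Cplx) : Prop := @fderiv CC g z L.
Definition Cdiff (g : Cplx -> Cplx) (z : Cplx) : Prop := exists L, fderivC g z L.
Definition Ccont (g : Cplx -> Cplx) (z : Cplx) : Prop :=
  forall eps, 0 < eps -> exists delta, 0 < delta /\
    forall w, Cmod (Csub w z) < delta -> Cmod (Csub (g w) (g z)) < eps.

Lemma dualC_form (L : Cplx -> Cplx) : @in_dual CC L -> forall h, L h = Cmul h (L C1).
Proof. intros [[_ H] _] h. rewrite <- H. f_equal. simpl. symmetry. apply Cmul_1_r. Qed.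

Lemma fderivC_est g z L : fderivC g z L -> forall eps, 0 < eps -> exists delta, 0 < delta /\
  forall w, Cmod (Csub w z) < delta ->
    Cmod (Csub (Csub (g w) (g z)) (Cmul (L C1) (Csub w z))) <= eps * Cmod (Csub w z).
Proof.
  intros [HL D] eps He. destruct (D eps He) as [d [Hd E]]. exists d; split; auto.
  intros w Hw. specialize (E (Csub w z) Hw). simpl in E. rewrite (dualC_form L HL) in E.
  replace (Cadd z (Csub w z)) with w in E by Ceq. rewrite Cmul_comm. exact E.
Qed.

Lemma Cdiff_cont g z : Cdiff g z -> Ccont g z.
Proof.
  intros [L F]. destruct (fderiv_lip (X := CC) _ _ _ F) as [K HK].
  intros eps He. destruct (lip_vanishes _ _ HK (eps / 2)) as [d [Hd B]]; [lra|].
  exists d. split; auto. intros w Hw. specialize (B (Csub w z) Hw). simpl in B.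
  replace (Cadd z (Csub w z)) with w in B by Ceq. lra.
Qed.

Lemma Ccont_add f g z : Ccont f z -> Ccont g z -> Ccont (fun w => Cadd (f w) (g w)) z.
Proof.
  intros Hf Hg eps He. destruct (Hf (eps/2)) as [d1 [Hd1 E1]]; [lra|].
  destruct (Hg (eps/2)) as [d2 [Hd2 E2]]; [lra|].
  exists (Rmin d1 d2). split; [apply Rmin_glb_lt; auto|]. intros w Hw.
  specialize (E1 w (Rlt_le_trans _ _ _ Hw (Rmin_l _ _))).
  specialize (E2 w (Rlt_le_trans _ _ _ Hw (Rmin_r _ _))).
  replace (Csub (Cadd (f w) (g w)) (Cadd (f z) (g z)))
    with (Cadd (Csub (f w) (f z)) (Csub (g w) (g z))) by Ceq.
  eapply Rle_lt_trans; [apply Cmod_tri|lra].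
Qed.

Lemma Ccont_sub f g z : Ccont f z -> Ccont g z -> Ccont (fun w => Csub (f w) (g w)) z.
Proof.
  intros Hf Hg eps He. destruct (Hf (eps/2)) as [d1 [Hd1 E1]]; [lra|].
  destruct (Hg (eps/2)) as [d2 [Hd2 E2]]; [lra|].
  exists (Rmin d1 d2). split; [apply Rmin_glb_lt; auto|]. intros w Hw.
  specialize (E1 w (Rlt_le_trans _ _ _ Hw (Rmin_l _ _))).
  specialize (E2 w (Rlt_le_trans _ _ _ Hw (Rmin_r _ _))).
  replace (Csub (Csub (f w) (g w)) (Csub (f z) (g z)))
    with (Csub (Csub (f w) (f z)) (Csub (g w) (g z))) by Ceq.
  eapply Rle_lt_trans; [apply Cmod_sub_le|lra].
Qed.

Lemma Cdiff_const a z : Cdiff (fun _ => a) z.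
Proof. eexists. apply (fderiv_const (X := CC)). Qed.
Lemma Cdiff_id z : Cdiff (fun w => w) z.
Proof.
  exists (fun h => h). apply (fderiv_dual (X := CC) (fun h : CC => h)).
  split; [split; reflexivity|]. exists 1. intros; simpl; lra.
Qed.
Lemma Cdiff_add f g z : Cdiff f z -> Cdiff g z -> Cdiff (fun w => Cadd (f w) (g w)) z.
Proof. intros [L1 H1] [L2 H2]. eexists. apply (fderiv_add (X := CC)); eauto. Qed.
Lemma Cdiff_sub f g z : Cdiff f z -> Cdiff g z -> Cdiff (fun w => Csub (f w) (g w)) z.
Proof. intros [L1 H1] [L2 H2]. eexists. apply (fderiv_sub (X := CC)); eauto. Qed.
Lemma Cdiff_mul f g z : Cdiff f z -> Cdiff g z -> Cdiff (fun w => Cmul (f w) (g w)) z.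
Proof. intros [L1 H1] [L2 H2]. eexists. apply (fderiv_mul (X := CC)); eauto. Qed.
Lemma Cdiff_scal a f z : Cdiff f z -> Cdiff (fun w => Cmul a (f w)) z.
Proof. intros [L H]. eexists. apply (fderiv_scal (X := CC)); eauto. Qed.
Lemma Cdiff_Cinv z : z <> C0 -> Cdiff Cinv z.
Proof.
  intro H. destruct (Cdiff_id z) as [L HL]. eexists.
  apply (fderiv_inv (X := CC) (fun w => w)); eauto.
Qed.

Local Notation RV := R_CompleteNormedModule.

Definition CI (h : R -> Cplx) (a b : R) : Cplx :=
  (RInt (fun t => fst (h t)) a b, RInt (fun t => snd (h t)) a b).
Definition cint (h : R -> Cplx) (a b : R) : Prop :=
  ex_RInt (fun t => fst (h t)) a b /\ ex_RInt (fun t => snd (h t)) a b.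

Lemma RInt_R_const (c a b : R) : RInt (fun _ => c) a b = (b - a) * c.
Proof. rewrite RInt_const. reflexivity. Qed.

Lemma CI_chasles h a b c : cint h a b -> cint h b c -> Cadd (CI h a b) (CI h b c) = CI h a c.
Proof. intros [A1 A2] [B1 B2]. unfold CI, Cadd; simpl. f_equal; apply (RInt_Chasles (V := RV)); auto. Qed.

Lemma CI_add h1 h2 a b : cint h1 a b -> cint h2 a b ->
  CI (fun t => Cadd (h1 t) (h2 t)) a b = Cadd (CI h1 a b) (CI h2 a b).
Proof. intros [A1 A2] [B1 B2]. unfold CI, Cadd; simpl. f_equal; apply (RInt_plus (V := RV)); auto. Qed.

Lemma CI_scal c h a b : cint h a b -> CI (fun t => Cmul c (h t)) a b = Cmul c (CI h a b).
Proof.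
  intros [A1 A2].
  assert (S1 : ex_RInt (fun t => fst c * fst (h t)) a b) by (apply (ex_RInt_scal (V := RV)); auto).
  assert (S2 : ex_RInt (fun t => snd c * snd (h t)) a b) by (apply (ex_RInt_scal (V := RV)); auto).
  assert (S3 : ex_RInt (fun t => fst c * snd (h t)) a b) by (apply (ex_RInt_scal (V := RV)); auto).
  assert (S4 : ex_RInt (fun t => snd c * fst (h t)) a b) by (apply (ex_RInt_scal (V := RV)); auto).
  unfold CI, Cmul; simpl. f_equal.
  - rewrite (RInt_minus (V := RV) (fun t => fst c * fst (h t)) (fun t => snd c * snd (h t))) by auto.
    rewrite (RInt_scal (V := RV) (fun t => fst (h t))), (RInt_scal (V := RV) (fun t => snd (h t))); auto.
  - rewrite (RInt_plus (V := RV) (fun t => fst c * snd (h t)) (fun t => snd c * fst (h t))) by auto.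
    rewrite (RInt_scal (V := RV) (fun t => fst (h t))), (RInt_scal (V := RV) (fun t => snd (h t))); auto.
Qed.

Lemma CI_ext h1 h2 a b : a <= b -> (forall t, a <= t <= b -> h1 t = h2 t) -> CI h1 a b = CI h2 a b.
Proof.
  intros Hab H. unfold CI.
  f_equal; apply RInt_ext; intros t Ht; rewrite Rmin_left, Rmax_right in Ht by lra; rewrite H; auto; lra.
Qed.

(** |int_a^b h| <= (b - a) sup |h|: pair the integral with its own direction. *)
Lemma CI_bound h a b K : a <= b -> cint h a b -> (forall t, a <= t <= b -> Cmod (h t) <= K) ->
  Cmod (CI h a b) <= (b - a) * K.
Proof.
  intros Hab [A1 A2] HK. set (A := CI h a b). destruct (Req_dec (Cmod A) 0) as [E|E].
  { rewrite E. destruct (Req_dec a b); [subst; lra|].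
    assert (0 <= K) by (specialize (HK a ltac:(lra)); pose proof (Cmod_nonneg (h a)); lra). nra. }
  assert (Hm : 0 < Cmod A) by (pose proof (Cmod_nonneg A); lra).
  assert (Ex : ex_RInt (fun t => fst A * fst (h t) + snd A * snd (h t)) a b).
  { apply (ex_RInt_plus (V := RV)); apply (ex_RInt_scal (V := RV)); auto. }
  assert (E2 : Cmod A * Cmod A = RInt (fun t => fst A * fst (h t) + snd A * snd (h t)) a b).
  { rewrite (RInt_plus (V := RV) (fun t => fst A * fst (h t)) (fun t => snd A * snd (h t)));
      try (apply (ex_RInt_scal (V := RV)); auto).
    rewrite (RInt_scal (V := RV) (fun t => fst (h t))), (RInt_scal (V := RV) (fun t => snd (h t))); auto.
    rewrite Cmod_sq. reflexivity. }
  assert (E3 : RInt (fun t => fst A * fst (h t) + snd A * snd (h t)) a b <= RInt (fun _ => Cmod A * K) a b).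
  { apply RInt_le; auto; [apply ex_RInt_const|]. intros t Ht. specialize (HK t ltac:(lra)).
    eapply Rle_trans; [apply dot_le|]. apply Rmult_le_compat_l; auto. lra. }
  rewrite RInt_R_const in E3. nra.
Qed.

Lemma Ccont_line g (p : R -> Cplx) t0 :
  (forall t, Cmod (Csub (p t) (p t0)) = Rabs (t - t0)) -> Ccont g (p t0) ->
  continuous (fun t => fst (g (p t))) t0 /\ continuous (fun t => snd (g (p t))) t0.
Proof.
  intros Hp H.
  assert (Hc : forall k : Cplx -> R, (forall z, Rabs (k z) <= Cmod z) ->
            (forall z w, k (Csub z w) = k z - k w) -> continuous (fun t => k (g (p t))) t0).
  { intros k Hk Hlin. apply continuity_pt_filterlim. intros eps He.
    destruct (H eps He) as [d [Hd H']]. exists d. split; auto. intros t [_ Ht].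
    simpl in *. unfold Rdist in *. rewrite <- Hlin. eapply Rle_lt_trans; [apply Hk|].
    apply H'. rewrite Hp. auto. }
  split; apply Hc; try (intros; apply Cmod_fst); try (intros; apply Cmod_snd);
    intros [] []; simpl; ring.
Qed.

Lemma Cmod_hor t t0 y : Cmod (Csub (t, y) (t0, y)) = Rabs (t - t0).
Proof. unfold Csub, Cadd, Copp; simpl. replace (y + - y) with 0 by ring. rewrite Cmod_real. f_equal; ring. Qed.
Lemma Cmod_ver t t0 x : Cmod (Csub (x, t) (x, t0)) = Rabs (t - t0).
Proof.
  unfold Csub, Cadd, Copp, Cmod; simpl. replace (x + - x) with 0 by ring.
  rewrite <- sqrt_Rsqr_abs. f_equal. unfold Rsqr; ring.
Qed.

Lemma cint_h g y a b : a <= b -> (forall t, a <= t <= b -> Ccont g (t, y)) -> cint (fun t => g (t, y)) a b.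
Proof.
  intros Hab H. split; apply (ex_RInt_continuous (V := RV)); intros z Hz;
    rewrite Rmin_left, Rmax_right in Hz by lra;
    apply (Ccont_line g (fun t => (t, y))); auto; intro; apply Cmod_hor.
Qed.
Lemma cint_v g x c d : c <= d -> (forall t, c <= t <= d -> Ccont g (x, t)) -> cint (fun t => g (x, t)) c d.
Proof.
  intros Hcd H. split; apply (ex_RInt_continuous (V := RV)); intros z Hz;
    rewrite Rmin_left, Rmax_right in Hz by lra;
    apply (Ccont_line g (fun t => (x, t))); auto; intro; apply Cmod_ver.
Qed.

(** ** Integrals over the boundary of a rectangle *)

(** [Bd g a b c d] is the counterclockwise integral of g over the boundary of
    [a,b] x [c,d], assembled from horizontal ([Hs]) and vertical ([Vs]) sides. *)
Definition Hs (g : Cplx -> Cplx) (y a b : R) : Cplx := CI (fun t => g (t, y)) a b.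
Definition Vs (g : Cplx -> Cplx) (x c d : R) : Cplx := Cmul (0, 1) (CI (fun t => g (x, t)) c d).
Definition Bd (g : Cplx -> Cplx) (a b c d : R) : Cplx :=
  Cadd (Csub (Hs g c a b) (Hs g d a b)) (Csub (Vs g b c d) (Vs g a c d)).
Definition onBd (a b c d : R) (z : Cplx) : Prop :=
  (a <= fst z <= b /\ (snd z = c \/ snd z = d)) \/ (c <= snd z <= d /\ (fst z = a \/ fst z = b)).
Definition bdcont (g : Cplx -> Cplx) (a b c d : R) : Prop := forall z, onBd a b c d z -> Ccont g z.
Definition rcont (g : Cplx -> Cplx) (a b c d : R) : Prop :=
  forall z, a <= fst z <= b -> c <= snd z <= d -> Ccont g z.

Section BoundaryIntegral.
Variables a b c d : R.
Hypothesis Hab : a <= b.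
Hypothesis Hcd : c <= d.

Lemma bd_cint g : bdcont g a b c d ->
  cint (fun t => g (t, c)) a b /\ cint (fun t => g (t, d)) a b /\
  cint (fun t => g (a, t)) c d /\ cint (fun t => g (b, t)) c d.
Proof.
  intro H. split; [|split; [|split]].
  - apply cint_h; auto. intros t Ht. apply H. left. simpl. auto.
  - apply cint_h; auto. intros t Ht. apply H. left. simpl. auto.
  - apply cint_v; auto. intros t Ht. apply H. right. simpl. auto.
  - apply cint_v; auto. intros t Ht. apply H. right. simpl. auto.
Qed.

Lemma Bd_add g1 g2 : bdcont g1 a b c d -> bdcont g2 a b c d ->
  Bd (fun z => Cadd (g1 z) (g2 z)) a b c d = Cadd (Bd g1 a b c d) (Bd g2 a b c d).
Proof.
  intros H1 H2. destruct (bd_cint g1 H1) as [A1 [A2 [A3 A4]]], (bd_cint g2 H2) as [B1 [B2 [B3 B4]]].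
  unfold Bd, Hs, Vs. rewrite !CI_add by auto. Ceq.
Qed.

Lemma Bd_scal k g : bdcont g a b c d -> Bd (fun z => Cmul k (g z)) a b c d = Cmul k (Bd g a b c d).
Proof.
  intros H. destruct (bd_cint g H) as [A1 [A2 [A3 A4]]].
  unfold Bd, Hs, Vs. rewrite !CI_scal by auto. Ceq.
Qed.

Lemma Bd_ext g1 g2 : (forall z, onBd a b c d z -> g1 z = g2 z) -> Bd g1 a b c d = Bd g2 a b c d.
Proof.
  intro H. unfold Bd, Hs, Vs.
  rewrite (CI_ext (fun t => g1 (t, c)) (fun t => g2 (t, c))), (CI_ext (fun t => g1 (t, d)) (fun t => g2 (t, d))),
    (CI_ext (fun t => g1 (a, t)) (fun t => g2 (a, t))), (CI_ext (fun t => g1 (b, t)) (fun t => g2 (b, t))); auto;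
    intros t Ht; apply H; unfold onBd; simpl; auto.
Qed.

Lemma Bd_bound g K : bdcont g a b c d -> (forall z, onBd a b c d z -> Cmod (g z) <= K) ->
  Cmod (Bd g a b c d) <= 2 * (b - a) * K + 2 * (d - c) * K.
Proof.
  intros H1 H2. destruct (bd_cint g H1) as [A1 [A2 [A3 A4]]]. unfold Bd, Hs, Vs.
  assert (B1 : Cmod (CI (fun t => g (t, c)) a b) <= (b - a) * K)
    by (apply CI_bound; auto; intros t Ht; apply H2; left; simpl; auto).
  assert (B2 : Cmod (CI (fun t => g (t, d)) a b) <= (b - a) * K)
    by (apply CI_bound; auto; intros t Ht; apply H2; left; simpl; auto).
  assert (B3 : Cmod (CI (fun t => g (a, t)) c d) <= (d - c) * K)
    by (apply CI_bound; auto; intros t Ht; apply H2; right; simpl; auto).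
  assert (B4 : Cmod (CI (fun t => g (b, t)) c d) <= (d - c) * K)
    by (apply CI_bound; auto; intros t Ht; apply H2; right; simpl; auto).
  assert (Ci : Cmod (0, 1) = 1) by (unfold Cmod; simpl; replace (0*0+1*1) with 1 by ring; apply sqrt_1).
  eapply Rle_trans; [apply Cmod_tri|].
  apply Rplus_le_compat; (eapply Rle_trans; [apply Cmod_sub_le|]); rewrite ?Cmod_mul, ?Ci; lra.
Qed.

End BoundaryIntegral.

(** Boundary integrals of affine functions vanish: compute them explicitly. *)
Lemma RInt_lin p q a b : RInt (fun t => p + q * t) a b = p * (b - a) + q * (b * b - a * a) / 2.
Proof.
  apply is_RInt_unique.
  replace (p * (b - a) + q * (b * b - a * a) / 2)
    with (minus (p * b + q * b * b / 2) (p * a + q * a * a / 2)) by (unfold minus, plus, opp; simpl; field).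
  apply (is_RInt_derive (V := RV) (fun t => p * t + q * t * t / 2) (fun t => p + q * t)).
  - intros x _. auto_derive; auto. field.
  - intros x _. apply (ex_derive_continuous (fun t => p + q * t)). auto_derive. auto.
Qed.

Lemma Bd_affine al be a b c d : Bd (fun z => Cadd al (Cmul be z)) a b c d = C0.
Proof.
  assert (Eh : forall y, Hs (fun z => Cadd al (Cmul be z)) y a b =
    ((fst al - snd be * y) * (b - a) + fst be * (b * b - a * a) / 2,
     (snd al + fst be * y) * (b - a) + snd be * (b * b - a * a) / 2)).
  { intro y. unfold Hs, CI. f_equal; rewrite <- RInt_lin; apply RInt_ext; intros; simpl; ring. }
  assert (Ev : forall x, CI (fun t => Cadd al (Cmul be (x, t))) c d =
    ((fst al + fst be * x) * (d - c) + (- snd be) * (d * d - c * c) / 2,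
     (snd al + snd be * x) * (d - c) + fst be * (d * d - c * c) / 2)).
  { intro x. unfold CI. f_equal; rewrite <- RInt_lin; apply RInt_ext; intros; simpl; ring. }
  unfold Bd, Vs. rewrite !Eh, !Ev. unfold Csub, Cadd, Copp, Cmul, C0; simpl. f_equal; field.
Qed.

(** Cutting a rectangle into four: interior sides cancel. *)
Lemma Bd_subdiv g a m b c n d : a <= m <= b -> c <= n <= d -> rcont g a b c d ->
  Bd g a b c d = Cadd (Cadd (Bd g a m c n) (Bd g m b c n)) (Cadd (Bd g a m n d) (Bd g m b n d)).
Proof.
  intros Hm Hn H. unfold Bd.
  assert (Ch : forall y, c <= y <= d -> Hs g y a b = Cadd (Hs g y a m) (Hs g y m b)).
  { intros y Hy. unfold Hs. symmetry. apply CI_chasles; apply cint_h; try lra; intros t Ht; apply H; simpl; lra. }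
  assert (Cv : forall x, a <= x <= b -> Vs g x c d = Cadd (Vs g x c n) (Vs g x n d)).
  { intros x Hx. unfold Vs. rewrite <- Cmul_add_r. f_equal. symmetry.
    apply CI_chasles; apply cint_v; try lra; intros t Ht; apply H; simpl; lra. }
  rewrite (Ch c), (Ch d), (Cv a), (Cv b) by lra. unfold Csub, Cadd, Copp; simpl. f_equal; ring.
Qed.

(** Near a point z of complex differentiability, g is affine up to o(|w - z|), so
    the boundary integral over a small rectangle containing z is o(perimeter^2). *)
Lemma Bd_small_near g z L : fderivC g z L -> forall eps, 0 < eps -> exists delta, 0 < delta /\
  forall a b c d, a <= fst z <= b -> c <= snd z <= d -> (b - a) + (d - c) < delta ->
    bdcont g a b c d -> Cmod (Bd g a b c d) <= 2 * eps * ((b - a) + (d - c)) ^ 2.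
Proof.
  intros HL eps He. destruct (fderivC_est _ _ _ HL eps He) as [dl [Hdl E]].
  exists dl. split; auto. intros a b c d Hx Hy Hs Hcont.
  set (s := (b - a) + (d - c)) in *. set (be := L C1) in *.
  set (aff := fun w => Cadd (Csub (g z) (Cmul be z)) (Cmul be w)).
  assert (Haff : forall w, Cdiff aff w)
    by (intro w; apply Cdiff_add; [apply Cdiff_const|apply Cdiff_scal, Cdiff_id]).
  assert (Hcont' : bdcont (fun w => Csub (g w) (aff w)) a b c d)
    by (intros w Hw; apply Ccont_sub; [apply Hcont; auto|apply Cdiff_cont, Haff]).
  assert (Eg : Bd g a b c d = Bd (fun w => Csub (g w) (aff w)) a b c d).
  { rewrite <- (Cadd_0_l (Bd (fun w => Csub (g w) (aff w)) a b c d)).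
    rewrite <- (Bd_affine (Csub (g z) (Cmul be z)) be a b c d).
    rewrite <- Bd_add; [|lra|lra|intros w _; apply Cdiff_cont, Haff|auto].
    apply Bd_ext; [lra|lra|]. intros w _. unfold aff. Ceq. }
  rewrite Eg. replace (2 * eps * s ^ 2) with (2 * (b - a) * (eps * s) + 2 * (d - c) * (eps * s))
    by (unfold s; ring).
  apply Bd_bound; auto; try lra. intros w Hw.
  assert (Hwz : Cmod (Csub w z) <= s).
  { eapply Rle_trans; [apply Cmod_le_sum|]. unfold s.
    assert (a <= fst w <= b /\ c <= snd w <= d) by (destruct Hw as [[? [?|?]]|[? [?|?]]]; lra).
    simpl. unfold Rabs; destruct (Rcase_abs _); destruct (Rcase_abs _); lra. }
  replace (Csub (g w) (aff w)) with (Csub (Csub (g w) (g z)) (Cmul be (Csub w z))) by (unfold aff; Ceq).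
  eapply Rle_trans; [apply E; lra|]. apply Rmult_le_compat_l; lra.
Qed.

(** ** Goursat's theorem for rectangles *)

Record rect := mkR { ra : R; rb : R; rc : R; rd : R }.

Section Goursat.
Variable g : Cplx -> Cplx.
Variables a0 b0 c0 d0 : R.
Hypothesis Hab : a0 < b0.
Hypothesis Hcd : c0 < d0.
Hypothesis HD : forall z, a0 <= fst z <= b0 -> c0 <= snd z <= d0 -> Cdiff g z.

(** Bisection: among the four quarters of a rectangle pick one carrying at least a
    quarter of the boundary integral, and iterate. *)
Definition BdR (r : rect) : Cplx := Bd g (ra r) (rb r) (rc r) (rd r).
Definition q1 r := mkR (ra r) ((ra r + rb r)/2) (rc r) ((rc r + rd r)/2).
Definition q2 r := mkR ((ra r + rb r)/2) (rb r) (rc r) ((rc r + rd r)/2).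
Definition q3 r := mkR (ra r) ((ra r + rb r)/2) ((rc r + rd r)/2) (rd r).
Definition q4 r := mkR ((ra r + rb r)/2) (rb r) ((rc r + rd r)/2) (rd r).
Definition choose (r : rect) : rect :=
  let v := Cmod (BdR r) / 4 in
  if Rle_dec v (Cmod (BdR (q1 r))) then q1 r else
  if Rle_dec v (Cmod (BdR (q2 r))) then q2 r else
  if Rle_dec v (Cmod (BdR (q3 r))) then q3 r else q4 r.
Fixpoint nested (n : nat) : rect :=
  match n with O => mkR a0 b0 c0 d0 | S k => choose (nested k) end.

Definition inside (r : rect) : Prop :=
  a0 <= ra r /\ ra r <= rb r /\ rb r <= b0 /\ c0 <= rc r /\ rc r <= rd r /\ rd r <= d0.

Lemma choose_geom r : ra r <= rb r -> rc r <= rd r -> let r' := choose r in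
  ra r <= ra r' /\ rb r' <= rb r /\ rc r <= rc r' /\ rd r' <= rd r /\
  rb r' - ra r' = (rb r - ra r) / 2 /\ rd r' - rc r' = (rd r - rc r) / 2.
Proof.
  intros H1 H2. unfold choose. simpl.
  destruct (Rle_dec _ _); [|destruct (Rle_dec _ _); [|destruct (Rle_dec _ _)]]; simpl;
    (split; [|split; [|split; [|split; [|split]]]]); lra.
Qed.

Lemma choose_big r : inside r -> Cmod (BdR r) / 4 <= Cmod (BdR (choose r)).
Proof.
  intros [h1 [h2 [h3 [h4 [h5 h6]]]]]. unfold choose.
  destruct (Rle_dec _ _); auto. destruct (Rle_dec _ _); auto. destruct (Rle_dec _ _); auto.
  assert (E : BdR r = Cadd (Cadd (BdR (q1 r)) (BdR (q2 r))) (Cadd (BdR (q3 r)) (BdR (q4 r)))).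
  { unfold BdR, q1, q2, q3, q4; simpl. apply Bd_subdiv; try lra.
    intros z Hz1 Hz2. apply Cdiff_cont. apply HD; lra. }
  pose proof (Cmod_tri (Cadd (BdR (q1 r)) (BdR (q2 r))) (Cadd (BdR (q3 r)) (BdR (q4 r)))).
  pose proof (Cmod_tri (BdR (q1 r)) (BdR (q2 r))). pose proof (Cmod_tri (BdR (q3 r)) (BdR (q4 r))).
  rewrite <- E in H. lra.
Qed.

Lemma nested_props n : inside (nested n) /\
  rb (nested n) - ra (nested n) = (b0 - a0) * (/2)^n /\
  rd (nested n) - rc (nested n) = (d0 - c0) * (/2)^n /\
  Cmod (BdR (mkR a0 b0 c0 d0)) <= Cmod (BdR (nested n)) * (2^n * 2^n).
Proof.
  induction n as [|n IH]; simpl.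
  - unfold inside; simpl. repeat split; lra.
  - destruct IH as [[h1 [h2 [h3 [h4 [h5 h6]]]]] [W [H B]]].
    pose proof (choose_geom (nested n) h2 h5) as [g1 [g2 [g3 [g4 [g5 g6]]]]].
    pose proof (choose_big (nested n) ltac:(unfold inside; tauto)).
    assert (0 < 2^n) by (apply pow_lt; lra).
    split; [unfold inside; repeat split; lra|]. split; [rewrite g5, W; field|].
    split; [rewrite g6, H; field|]. eapply Rle_trans; [apply B|nra].
Qed.

Lemma nested_mono n k : ra (nested n) <= ra (nested (n + k)) /\ rb (nested (n + k)) <= rb (nested n) /\
  rc (nested n) <= rc (nested (n + k)) /\ rd (nested (n + k)) <= rd (nested n).
Proof.
  induction k as [|k IH]; [rewrite Nat.add_0_r; lra|].
  replace (n + S k)%nat with (S (n + k)) by lia. simpl.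
  destruct (nested_props (n + k)) as [[h1 [h2 [h3 [h4 [h5 h6]]]]] _].
  pose proof (choose_geom (nested (n + k)) h2 h5) as [g1 [g2 [g3 [g4 _]]]]. lra.
Qed.

Lemma nested_point : exists z, forall n,
  ra (nested n) <= fst z <= rb (nested n) /\ rc (nested n) <= snd z <= rd (nested n).
Proof.
  assert (cross : forall n m, ra (nested n) <= rb (nested m) /\ rc (nested n) <= rd (nested m)).
  { intros n m. destruct (nested_mono n m) as [A1 [_ [A3 _]]], (nested_mono m n) as [_ [B2 [_ B4]]].
    replace (m + n)%nat with (n + m)%nat in * by lia.
    destruct (nested_props (n + m)) as [[h1 [h2 [h3 [h4 [h5 h6]]]]] _]. lra. }
  destruct (completeness (fun x => exists n, x = ra (nested n))) as [xs [Hx1 Hx2]].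
  { exists b0. intros x [n ->]. destruct (nested_props n) as [[h1 [h2 [h3 _]]] _]. lra. }
  { exists a0, O. reflexivity. }
  destruct (completeness (fun x => exists n, x = rc (nested n))) as [ys [Hy1 Hy2]].
  { exists d0. intros x [n ->]. destruct (nested_props n) as [[_ [_ [_ [h4 [h5 h6]]]]] _]. lra. }
  { exists c0, O. reflexivity. }
  exists (xs, ys). intro n. simpl. split; split.
  - apply Hx1. exists n; auto.
  - apply Hx2. intros x [m ->]. apply cross.
  - apply Hy1. exists n; auto.
  - apply Hy2. intros x [m ->]. apply cross.
Qed.

(** Goursat: if the integral over the boundary were c > 0, the n-th nested
    rectangle would carry at least c / 4^n, while differentiability at the common
    point bounds it by o(4^-n). *)
Theorem goursat : Bd g a0 b0 c0 d0 = C0.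
Proof.
  destruct (nested_point) as [z Hz].
  set (c := Cmod (BdR (mkR a0 b0 c0 d0))).
  destruct (Req_dec c 0) as [Ec0|Ec0]; [apply Cmod_eq0; exact Ec0|].
  assert (Hc : 0 < c) by (pose proof (Cmod_nonneg (BdR (mkR a0 b0 c0 d0))); unfold c in *; lra).
  exfalso. set (s0 := (b0 - a0) + (d0 - c0)). assert (Hs0 : 0 < s0) by (unfold s0; lra).
  destruct (HD z) as [L HL]; [pose proof (Hz O); simpl in *; lra..|].
  destruct (Bd_small_near g z L HL (c / (4 * (s0 * s0)))) as [dl [Hdl E]];
    [apply Rdiv_lt_0_compat; nra|].
  destruct (pow_lt_1_zero (/2) ltac:(rewrite Rabs_pos_eq; lra) (dl / s0)
    ltac:(apply Rdiv_lt_0_compat; lra)) as [N HN].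
  specialize (HN N (le_n N)). rewrite Rabs_pos_eq in HN by (apply pow_le; lra).
  destruct (nested_props N) as [[h1 [h2 [h3 [h4 [h5 h6]]]]] [W [H B]]].
  assert (Hpow : 0 < (/2)^N) by (apply pow_lt; lra).
  assert (Hper : (rb (nested N) - ra (nested N)) + (rd (nested N) - rc (nested N)) = s0 * (/2)^N)
    by (rewrite W, H; unfold s0; ring).
  assert (EN := E (ra (nested N)) (rb (nested N)) (rc (nested N)) (rd (nested N))
    ltac:(apply Hz) ltac:(apply Hz)).
  rewrite Hper in EN. specialize (EN ltac:(apply (Rmult_lt_compat_l s0) in HN; auto;
    replace (s0 * (dl / s0)) with dl in HN by (field; lra); lra)).
  specialize (EN ltac:(intros w Hw; apply Cdiff_cont, HD;
    destruct Hw as [[? [?|?]]|[? [?|?]]]; lra)).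
  assert (I2 : (/2)^N * 2^N = 1) by (rewrite <- Rpow_mult_distr; replace (/2*2) with 1 by field; apply pow1).
  fold (BdR (nested N)) in EN. fold c in B.
  assert (Cmod (BdR (nested N)) * (2^N * 2^N) <= c / 2).
  { apply Rle_trans with (2 * (c / (4 * (s0 * s0))) * (s0 * (/ 2) ^ N) ^ 2 * (2^N * 2^N)).
    - apply Rmult_le_compat_r; auto. pose proof (pow_lt 2 N). nra.
    - replace (2 * (c / (4 * (s0 * s0))) * (s0 * (/ 2) ^ N) ^ 2 * (2 ^ N * 2 ^ N))
        with (c / 2 * (((/2)^N * 2^N) * ((/2)^N * 2^N))) by (field; lra).
      rewrite I2. lra. }
  lra.
Qed.

End Goursat.

(** ** A Cauchy estimate on the unit square *)

Lemma nz_of_fst z : fst z <> 0 -> z <> C0.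
Proof. intros H E. subst. apply H. reflexivity. Qed.
Lemma nz_of_snd z : snd z <> 0 -> z <> C0.
Proof. intros H E. subst. apply H. reflexivity. Qed.

Lemma RInt_lo f a b lo : a <= b -> ex_RInt f a b -> (forall t, a < t < b -> lo <= f t) ->
  lo * (b - a) <= RInt f a b.
Proof. intros H1 H2 H3. rewrite Rmult_comm, <- RInt_R_const. apply RInt_le; auto. apply ex_RInt_const. Qed.
Lemma RInt_hi f a b hi : a <= b -> ex_RInt f a b -> (forall t, a < t < b -> f t <= hi) ->
  RInt f a b <= hi * (b - a).
Proof. intros H1 H2 H3. rewrite Rmult_comm, <- RInt_R_const. apply RInt_le; auto. apply ex_RInt_const. Qed.

(** The winding integral of 1/z around the unit square (which equals 2 pi i) has
    imaginary part at least 4: each side contributes at least 1. *)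
Lemma Bd_inv_im : 4 <= snd (Bd Cinv (-1) 1 (-1) 1).
Proof.
  assert (Hc : forall z, z <> C0 -> Ccont Cinv z) by (intros; apply Cdiff_cont, Cdiff_Cinv; auto).
  assert (I1 : cint (fun t => Cinv (t, -1)) (-1) 1)
    by (apply cint_h; [lra|]; intros; apply Hc, nz_of_snd; simpl; lra).
  assert (I2 : cint (fun t => Cinv (t, 1)) (-1) 1)
    by (apply cint_h; [lra|]; intros; apply Hc, nz_of_snd; simpl; lra).
  assert (I3 : cint (fun t => Cinv (1, t)) (-1) 1)
    by (apply cint_v; [lra|]; intros; apply Hc, nz_of_fst; simpl; lra).
  assert (I4 : cint (fun t => Cinv (-1, t)) (-1) 1)
    by (apply cint_v; [lra|]; intros; apply Hc, nz_of_fst; simpl; lra).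
  destruct I1 as [_ J1], I2 as [_ J2], I3 as [J3 _], I4 as [J4 _].
  unfold Bd, Hs, Vs, CI, Csub, Cadd, Copp, Cmul. simpl.
  assert (1 <= RInt (fun t => snd (Cinv (t, -1))) (-1) 1).
  { apply Rle_trans with (/2 * (1 - -1)); [lra|]. apply RInt_lo; auto; [lra|].
    intros t Ht. unfold Cinv; simpl.
    apply Rmult_le_reg_r with (t * t + -1 * -1); [nra|]. field_simplify; nra. }
  assert (RInt (fun t => snd (Cinv (t, 1))) (-1) 1 <= -1).
  { apply Rle_trans with (-/2 * (1 - -1)); [|lra]. apply RInt_hi; auto; [lra|].
    intros t Ht. unfold Cinv; simpl.
    apply Rmult_le_reg_r with (t * t + 1 * 1); [nra|]. field_simplify; nra. }
  assert (1 <= RInt (fun t => fst (Cinv (1, t))) (-1) 1).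
  { apply Rle_trans with (/2 * (1 - -1)); [lra|]. apply RInt_lo; auto; [lra|].
    intros t Ht. unfold Cinv; simpl.
    apply Rmult_le_reg_r with (1 * 1 + t * t); [nra|]. field_simplify; nra. }
  assert (RInt (fun t => fst (Cinv (-1, t))) (-1) 1 <= -1).
  { apply Rle_trans with (-/2 * (1 - -1)); [|lra]. apply RInt_hi; auto; [lra|].
    intros t Ht. unfold Cinv; simpl.
    apply Rmult_le_reg_r with (-1 * -1 + t * t); [nra|]. field_simplify; nra. }
  unfold Cinv in *. simpl in *. lra.
Qed.

(** For g differentiable on the unit square except at 0, the boundary integral
    equals that over any smaller centred square: the frame between them is cut
    into four rectangles avoiding 0, on which Goursat applies. *)
Lemma annulus g e : 0 < e < 1 ->
  (forall z, z <> C0 -> -1 <= fst z <= 1 -> -1 <= snd z <= 1 -> Cdiff g z) ->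
  Bd g (-1) 1 (-1) 1 = Bd g (-e) e (-e) e.
Proof.
  intros He HD.
  assert (Gb : Bd g (-1) 1 (-1) (-e) = C0)
    by (apply goursat; try lra; intros z H1 H2; apply HD; try lra; apply nz_of_snd; lra).
  assert (Gt : Bd g (-1) 1 e 1 = C0)
    by (apply goursat; try lra; intros z H1 H2; apply HD; try lra; apply nz_of_snd; lra).
  assert (Gl : Bd g (-1) (-e) (-e) e = C0)
    by (apply goursat; try lra; intros z H1 H2; apply HD; try lra; apply nz_of_fst; lra).
  assert (Gr : Bd g e 1 (-e) e = C0)
    by (apply goursat; try lra; intros z H1 H2; apply HD; try lra; apply nz_of_fst; lra).
  assert (Ch : forall y, y <> 0 -> -1 <= y <= 1 ->
    Hs g y (-1) 1 = Cadd (Cadd (Hs g y (-1) (-e)) (Hs g y (-e) e)) (Hs g y e 1)).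
  { intros y Hy Hy'. unfold Hs.
    assert (forall a b, -1 <= a <= b -> b <= 1 -> cint (fun t => g (t, y)) a b).
    { intros a b Ha Hb. apply cint_h; [lra|]. intros t Ht.
      apply Cdiff_cont, HD; simpl; try lra. apply nz_of_snd; auto. }
    rewrite !CI_chasles; auto; apply H; lra. }
  assert (Cv : forall x, x <> 0 -> -1 <= x <= 1 ->
    Vs g x (-1) 1 = Cadd (Cadd (Vs g x (-1) (-e)) (Vs g x (-e) e)) (Vs g x e 1)).
  { intros x Hx Hx'. unfold Vs. rewrite <- !Cmul_add_r. f_equal.
    assert (forall a b, -1 <= a <= b -> b <= 1 -> cint (fun t => g (x, t)) a b).
    { intros a b Ha Hb. apply cint_v; [lra|]. intros t Ht.
      apply Cdiff_cont, HD; simpl; try lra. apply nz_of_fst; auto. }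
    rewrite !CI_chasles; auto; apply H; lra. }
  transitivity (Cadd (Bd g (-e) e (-e) e)
    (Cadd (Cadd (Bd g (-1) 1 (-1) (-e)) (Bd g (-1) 1 e 1)) (Cadd (Bd g (-1) (-e) (-e) e) (Bd g e 1 (-e) e)))).
  2:{ rewrite Gb, Gt, Gl, Gr. Ceq. }
  unfold Bd. rewrite (Ch (-e)), (Ch e), (Cv 1), (Cv (-1)); try lra.
  unfold Csub, Cadd, Copp. apply injective_projections; simpl; ring.
Qed.

Lemma onBd_sq e z : 0 < e -> onBd (-e) e (-e) e z ->
  z <> C0 /\ e <= Cmod z /\ Cmod z <= 2 * e /\ -e <= fst z <= e /\ -e <= snd z <= e.
Proof.
  intros He Hz.
  assert (Hbox : -e <= fst z <= e /\ -e <= snd z <= e) by (destruct Hz as [[? [?|?]]|[? [?|?]]]; lra).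
  assert (Hside : Rabs (fst z) = e \/ Rabs (snd z) = e).
  { destruct Hz as [[H1 [H2|H2]]|[H1 [H2|H2]]]; rewrite H2; [right|right|left|left];
      first [rewrite Rabs_Ropp|idtac]; apply Rabs_pos_eq; lra. }
  assert (He_le : e <= Cmod z)
    by (destruct Hside as [H|H]; rewrite <- H; [apply Cmod_fst|apply Cmod_snd]).
  split; [intro E; subst; rewrite Cmod_C0 in He_le; lra|]. split; auto. split; auto.
  eapply Rle_trans; [apply Cmod_le_sum|]. unfold Rabs. destruct (Rcase_abs _), (Rcase_abs _); lra.
Qed.

Lemma Bd_zero_of_small_near0 K :
  (forall z, z <> C0 -> -1 <= fst z <= 1 -> -1 <= snd z <= 1 -> Cdiff K z) ->
  (forall eta, 0 < eta -> exists e, 0 < e < 1 /\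
     forall z, onBd (-e) e (-e) e z -> Cmod (K z) * e <= eta) ->
  Bd K (-1) 1 (-1) 1 = C0.
Proof.
  intros HD Hsmall. apply Cmod_eq0. apply Rle_antisym; [|apply Cmod_nonneg].
  apply Rnot_lt_le. intro Hpos. set (eta := Cmod (Bd K (-1) 1 (-1) 1) / 16).
  destruct (Hsmall eta) as [e [He HK]]; [unfold eta; lra|].
  assert (Cmod (Bd K (-e) e (-e) e) <= 2 * (e - - e) * (eta / e) + 2 * (e - - e) * (eta / e)).
  { apply Bd_bound; try lra.
    - intros z Hz. destruct (onBd_sq e z ltac:(lra) Hz) as [Hz0 [_ [_ [? ?]]]].
      apply Cdiff_cont. apply HD; auto; lra.
    - intros z Hz. specialize (HK z Hz). apply Rmult_le_reg_r with e; [lra|].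
      replace (eta / e * e) with eta by (field; lra). auto. }
  replace (2 * (e - - e) * (eta / e) + 2 * (e - - e) * (eta / e)) with (8 * eta) in H by (field; lra).
  rewrite <- annulus in H by (auto; lra). unfold eta in H. lra.
Qed.

Lemma Bd_over_sq_bound h M :
  (forall z, onBd (-1) 1 (-1) 1 z -> Cdiff h z /\ Cmod (h z) <= M) ->
  Cmod (Bd (fun z => Cmul (h z) (Cmul (Cinv z) (Cinv z))) (-1) 1 (-1) 1) <= 8 * M.
Proof.
  intros Hh. replace (8 * M) with (2 * (1 - -1) * M + 2 * (1 - -1) * M) by ring.
  apply Bd_bound; try lra.
  - intros z Hz. destruct (onBd_sq 1 z ltac:(lra) Hz) as [Hz0 _]. destruct (Hh z Hz) as [Hd _].
    apply Cdiff_cont, Cdiff_mul; auto. apply Cdiff_mul; apply Cdiff_Cinv; auto.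
  - intros z Hz. destruct (onBd_sq 1 z ltac:(lra) Hz) as [Hz0 [Hz1 _]]. destruct (Hh z Hz) as [_ HM].
    rewrite !Cmod_mul, !Cmod_inv by auto.
    assert (/ Cmod z <= 1) by (rewrite <- Rinv_1; apply Rinv_le_contravar; lra).
    assert (0 <= / Cmod z) by (left; apply Rinv_0_lt_compat; lra).
    apply Rle_trans with (M * 1); [apply Rmult_le_compat; auto using Cmod_nonneg; nra|lra].
Qed.

Lemma Bd_cauchy_split g a b :
  (forall z, -1 <= fst z <= 1 -> -1 <= snd z <= 1 -> Cdiff g z) ->
  Bd (fun z => Cmul (g z) (Cmul (Cinv z) (Cinv z))) (-1) 1 (-1) 1 =
  Cadd (Bd (fun z => Cmul (Csub (Csub (g z) a) (Cmul b z)) (Cmul (Cinv z) (Cinv z))) (-1) 1 (-1) 1)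
       (Cadd (Cmul a (Bd (fun z => Cmul C1 (Cmul (Cinv z) (Cinv z))) (-1) 1 (-1) 1))
             (Cmul b (Bd Cinv (-1) 1 (-1) 1))).
Proof.
  intros HD.
  assert (BC : forall h, (forall z, z <> C0 -> -1 <= fst z <= 1 -> -1 <= snd z <= 1 -> Cdiff h z) ->
    bdcont h (-1) 1 (-1) 1).
  { intros h Hh z Hz. destruct (onBd_sq 1 z ltac:(lra) Hz) as [? [_ [_ [? ?]]]]. apply Cdiff_cont, Hh; auto. }
  assert (DI : forall z, z <> C0 -> Cdiff (fun w => Cmul (Cinv w) (Cinv w)) z)
    by (intros; apply Cdiff_mul; apply Cdiff_Cinv; auto).
  assert (Hle : -1 <= 1) by lra.
  assert (C1' : bdcont (fun z => Cmul C1 (Cmul (Cinv z) (Cinv z))) (-1) 1 (-1) 1)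
    by (apply BC; intros; apply Cdiff_mul; [apply Cdiff_const|apply DI; auto]).
  assert (C2 : bdcont Cinv (-1) 1 (-1) 1) by (apply BC; intros; apply Cdiff_Cinv; auto).
  assert (C3 : bdcont (fun z => Cmul a (Cmul C1 (Cmul (Cinv z) (Cinv z)))) (-1) 1 (-1) 1)
    by (apply BC; intros; apply Cdiff_scal, Cdiff_mul; [apply Cdiff_const|apply DI; auto]).
  assert (C4 : bdcont (fun z => Cmul b (Cinv z)) (-1) 1 (-1) 1)
    by (apply BC; intros; apply Cdiff_scal, Cdiff_Cinv; auto).
  assert (C5 : bdcont (fun z => Cmul (Csub (Csub (g z) a) (Cmul b z)) (Cmul (Cinv z) (Cinv z))) (-1) 1 (-1) 1).
  { apply BC. intros. apply Cdiff_mul; [|apply DI; auto].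
    apply Cdiff_sub; [apply Cdiff_sub; [apply HD; auto|apply Cdiff_const]|apply Cdiff_scal, Cdiff_id]. }
  assert (C6 : bdcont (fun z => Cadd (Cmul a (Cmul C1 (Cmul (Cinv z) (Cinv z)))) (Cmul b (Cinv z))) (-1) 1 (-1) 1)
    by (intros z Hz; apply Ccont_add; [apply C3|apply C4]; auto).
  rewrite <- (Bd_scal _ _ _ _ Hle Hle a _ C1'), <- (Bd_scal _ _ _ _ Hle Hle b _ C2),
    <- (Bd_add _ _ _ _ Hle Hle _ _ C3 C4), <- (Bd_add _ _ _ _ Hle Hle _ _ C5 C6).
  apply Bd_ext; try lra. intros z Hz. destruct (onBd_sq 1 z ltac:(lra) Hz) as [Hz0 _].
  pose proof (Cnorm2_pos z Hz0). destruct z as [x y]. simpl in H.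
  destruct (g (x, y)) as [u v]. unfold Csub, Cadd, Copp, Cmul, Cinv, C1; simpl.
  apply injective_projections; simpl; field; lra.
Qed.

(** The remainder (g(z) - g(0) - g'(0) z) / z^2 has zero boundary integral: it is
    holomorphic off 0 and o(1/|z|) at 0. *)
Lemma Bd_remainder_zero g L0 :
  (forall z, -1 <= fst z <= 1 -> -1 <= snd z <= 1 -> Cdiff g z) -> fderivC g C0 L0 ->
  Bd (fun z => Cmul (Csub (Csub (g z) (g C0)) (Cmul (L0 C1) z)) (Cmul (Cinv z) (Cinv z))) (-1) 1 (-1) 1 = C0.
Proof.
  intros HD HL. apply Bd_zero_of_small_near0.
  - intros z Hz H1 H2. apply Cdiff_mul; [|apply Cdiff_mul; apply Cdiff_Cinv; auto].
    apply Cdiff_sub; [apply Cdiff_sub; [apply HD; auto|apply Cdiff_const]|apply Cdiff_scal, Cdiff_id].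
  - intros eta Heta. destruct (fderivC_est _ _ _ HL eta Heta) as [dl [Hdl E]].
    set (e := Rmin (dl / 4) (1/2)).
    assert (He : 0 < e) by (unfold e; apply Rmin_glb_lt; lra).
    assert (He1 : e < 1) by (unfold e; pose proof (Rmin_r (dl/4) (1/2)); lra).
    assert (He2 : 2 * e < dl) by (unfold e; pose proof (Rmin_l (dl/4) (1/2)); lra).
    exists e. split; [lra|]. intros z Hz. destruct (onBd_sq e z He Hz) as [Hz0 [Hz1 [Hz2 _]]].
    specialize (E z). replace (Csub z C0) with z in E by Ceq. specialize (E ltac:(lra)).
    rewrite !Cmod_mul, !Cmod_inv by auto.
    apply Rle_trans with (eta * Cmod z * (/ Cmod z * / Cmod z) * e).
    + apply Rmult_le_compat_r; [lra|]. apply Rmult_le_compat_r; auto.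
      left. apply Rmult_lt_0_compat; apply Rinv_0_lt_compat; lra.
    + replace (eta * Cmod z * (/ Cmod z * / Cmod z) * e) with (eta * (e / Cmod z)) by (field; lra).
      rewrite <- (Rmult_1_r eta) at 2. apply Rmult_le_compat_l; [lra|].
      apply Rmult_le_reg_r with (Cmod z); [lra|]. unfold Rdiv. rewrite Rmult_assoc, Rinv_l; lra.
Qed.

(** After removing the remainder, g'(0) times the
    integral of 1/z (of modulus at least 4) is the difference of the integrals of
    g / z^2 and g(0) / z^2, each at most 8 M. *)
Theorem cauchy_est g M L0 :
  (forall z, -1 <= fst z <= 1 -> -1 <= snd z <= 1 -> Cdiff g z) ->
  (forall z, -1 <= fst z <= 1 -> -1 <= snd z <= 1 -> Cmod (g z) <= M) ->
  fderivC g C0 L0 -> Cmod (L0 C1) <= 4 * M.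
Proof.
  intros HD HM HL. set (d0 := L0 C1). set (g0 := g C0).
  assert (Hg0 : Cmod g0 <= M) by (apply HM; simpl; lra).
  pose proof (Bd_remainder_zero g L0 HD HL) as BK. fold g0 d0 in BK.
  pose proof (Bd_cauchy_split g g0 d0 HD) as Dec. rewrite BK, Cadd_0_l in Dec.
  assert (B1 : Cmod (Bd (fun z => Cmul (g z) (Cmul (Cinv z) (Cinv z))) (-1) 1 (-1) 1) <= 8 * M)
    by (apply Bd_over_sq_bound; intros z Hz; destruct (onBd_sq 1 z ltac:(lra) Hz) as [_ [_ [_ [? ?]]]];
        split; [apply HD|apply HM]; auto).
  assert (B2 : Cmod (Bd (fun z => Cmul C1 (Cmul (Cinv z) (Cinv z))) (-1) 1 (-1) 1) <= 8 * 1)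
    by (apply Bd_over_sq_bound; intros; split; [apply Cdiff_const|rewrite Cmod_C1; lra]).
  assert (B3 : 4 <= Cmod (Bd Cinv (-1) 1 (-1) 1)).
  { pose proof Bd_inv_im. pose proof (Cmod_snd (Bd Cinv (-1) 1 (-1) 1)).
    pose proof (Rle_abs (snd (Bd Cinv (-1) 1 (-1) 1))). lra. }
  assert (Hd : Cmod (Cmul d0 (Bd Cinv (-1) 1 (-1) 1)) <= 16 * M).
  { replace (Cmul d0 (Bd Cinv (-1) 1 (-1) 1)) with
      (Csub (Bd (fun z => Cmul (g z) (Cmul (Cinv z) (Cinv z))) (-1) 1 (-1) 1)
            (Cmul g0 (Bd (fun z => Cmul C1 (Cmul (Cinv z) (Cinv z))) (-1) 1 (-1) 1))) by (rewrite Dec; Ceq).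
    eapply Rle_trans; [apply Cmod_sub_le|]. rewrite Cmod_mul.
    assert (Cmod g0 * Cmod (Bd (fun z => Cmul C1 (Cmul (Cinv z) (Cinv z))) (-1) 1 (-1) 1) <= M * 8)
      by (apply Rmult_le_compat; auto using Cmod_nonneg; lra).
    lra. }
  rewrite Cmod_mul in Hd. fold d0. pose proof (Cmod_nonneg d0). nra.
Qed.

(** ** Uniform differentiability on smaller balls *)

Section UniformDifferentiability.
Context {X : CBanach}.
Implicit Types (f : X -> Cplx) (p q w u y h : X).

Lemma slice f y w l0 L : fderiv f (vadd y (vscal l0 w)) L ->
  fderivC (fun l => f (vadd y (vscal l w))) l0 (fun m => L (vscal m w)).
Proof.
  intros [HL D]. destruct (dual_bound _ HL) as [M [HM BM]]. pose proof HL as [[A S] _].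
  split.
  - split; [split|].
    + intros a b. simpl. rewrite vscal_distr_c, A. reflexivity.
    + intros a b. simpl. rewrite <- vscal_assoc, S. reflexivity.
    + exists (M * vnorm w). intro m. simpl. eapply Rle_trans; [apply BM|].
      rewrite vnorm_scal. right; ring.
  - assert (Hw : forall m : CC, vnorm (vscal m w) <= (vnorm w + 1) * vnorm m).
    { intro m. simpl. rewrite vnorm_scal. pose proof (Cmod_nonneg m). pose proof (vnorm_nonneg w). nra. }
    eapply small_o_ext; [|apply (small_o_comp (Y := CC) _ (fun m : CC => vscal m w) (vnorm w + 1)
      ltac:(pose proof (vnorm_nonneg w); lra) Hw D)]. intro m. simpl.
    rewrite <- vadd_assoc, <- vscal_distr_c. reflexivity.
Qed.

(** Derivatives at nearby points of a smaller ball are close, with the modulus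
    controlled by that of f: apply the Cauchy estimate to the difference of the
    slices through p and p' in a direction w of length d0 = (1 - R1)/4. *)
Lemma deriv_close_dir f R1 p p' w Lp Lp' K : holomorphic_on_B f -> 0 <= R1 < 1 ->
  vnorm p <= R1 + (1 - R1)/4 -> vnorm p' <= R1 + (1 - R1)/4 -> vnorm w = (1 - R1)/4 ->
  (forall l, Rabs (fst l) <= 1 -> Rabs (snd l) <= 1 ->
     Cmod (Csub (f (vadd p (vscal l w))) (f (vadd p' (vscal l w)))) <= K) ->
  fderiv f p Lp -> fderiv f p' Lp' -> Cmod (Csub (Lp w) (Lp' w)) <= 4 * K.
Proof.
  intros Hf HR Hp Hp' Hw HK FLp FLp'. set (d0 := (1 - R1)/4) in *.
  assert (Hin : forall q l, vnorm q <= R1 + d0 -> -1 <= fst l <= 1 -> -1 <= snd l <= 1 ->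
    inB (vadd q (vscal l w))).
  { intros q l Hq H1 H2. unfold inB. eapply Rle_lt_trans; [apply vnorm_triangle|].
    rewrite vnorm_scal, Hw. pose proof (Cmod_le_sum l).
    assert (Rabs (fst l) <= 1 /\ Rabs (snd l) <= 1) by (split; apply Rabs_le; lra).
    unfold d0 in *. nra. }
  set (g := fun l => Csub (f (vadd p (vscal l w))) (f (vadd p' (vscal l w)))).
  apply holo_iff in Hf.
  assert (HD : forall l, -1 <= fst l <= 1 -> -1 <= snd l <= 1 -> Cdiff g l).
  { intros l H1 H2. destruct (Hf (vadd p (vscal l w))) as [L1 HL1]; [apply Hin; auto|].
    destruct (Hf (vadd p' (vscal l w))) as [L2 HL2]; [apply Hin; auto|].
    eexists. apply (fderiv_sub (X := CC)); apply slice; eauto. }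
  assert (H0 : fderivC g C0 (fun m => Csub (Lp (vscal m w)) (Lp' (vscal m w)))).
  { apply (fderiv_sub (X := CC)); apply slice; rewrite vscal_C0, vadd_0; auto. }
  pose proof (cauchy_est g K _ HD ltac:(intros l H1 H2; apply HK; apply Rabs_le; lra) H0) as CE.
  simpl in CE. rewrite (vscal_1 w) in CE. exact CE.
Qed.

(** Uniform continuity of f turns [deriv_close_dir] into uniform continuity of
    the derivative on the ball of radius R1 + (1 - R1)/4. *)
Lemma deriv_diff f R1 : holomorphic_on_B f -> unif_cont_on_B f -> 0 <= R1 < 1 ->
  forall eps, 0 < eps -> exists d1, 0 < d1 /\ forall p p' u Lp Lp',
    vnorm p <= R1 + (1 - R1)/4 -> vnorm p' <= R1 + (1 - R1)/4 -> vnorm (vsub p p') < d1 ->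
    fderiv f p Lp -> fderiv f p' Lp' -> Cmod (Csub (Lp u) (Lp' u)) <= eps * vnorm u.
Proof.
  intros Hf Uf HR eps He. set (d0 := (1 - R1)/4). assert (Hd0 : 0 < d0) by (unfold d0; lra).
  destruct (Uf (eps * d0 / 4)) as [d1 [Hd1 U]]; [apply Rdiv_lt_0_compat; [nra|lra]|].
  exists d1. split; auto. intros p p' u Lp Lp' Hp Hp' Hpp FLp FLp'.
  destruct FLp as [HLp DLp], FLp' as [HLp' DLp'].
  destruct (Req_dec (vnorm u) 0) as [Hu|Hu].
  { apply vnorm_eq0 in Hu. subst. destruct HLp as [Lp1 _], HLp' as [Lp1' _].
    rewrite (dual_zero _ Lp1), (dual_zero _ Lp1'), Csub_diag, Cmod_C0, vnorm_zero. lra. }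
  assert (Hu' : 0 < vnorm u) by (pose proof (vnorm_nonneg u); lra).
  set (w := vscal (d0 / vnorm u, 0) u).
  assert (Hw : vnorm w = d0)
    by (unfold w; rewrite vnorm_real_scal, Rabs_pos_eq; [field; lra|apply Rlt_le, Rdiv_lt_0_compat; lra]).
  assert (Hclose := deriv_close_dir f R1 p p' w Lp Lp' (eps * d0 / 4) Hf HR Hp Hp' Hw).
  assert (Hw_small : forall l, Rabs (fst l) <= 1 -> Rabs (snd l) <= 1 -> vnorm (vscal l w) <= 2 * d0).
  { intros l H1 H2. rewrite vnorm_scal, Hw. pose proof (Cmod_le_sum l). nra. }
  specialize (Hclose ltac:(intros l H1 H2; left; apply U;
      [unfold inB; eapply Rle_lt_trans; [apply vnorm_triangle|]; pose proof (Hw_small l H1 H2); unfold d0 in *; lra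
      |unfold inB; eapply Rle_lt_trans; [apply vnorm_triangle|]; pose proof (Hw_small l H1 H2); unfold d0 in *; lra
      |rewrite vsub_add_r; auto])
    ltac:(split; auto) ltac:(split; auto)).
  assert (Lu : forall L : X -> Cplx, in_dual L -> L u = Cmul (vnorm u / d0, 0) (L w)).
  { intros L [[_ S] _]. unfold w. rewrite S, Cmul_assoc.
    replace (Cmul (vnorm u / d0, 0) (d0 / vnorm u, 0)) with C1; [rewrite Cmul_1_l; auto|].
    unfold Cmul, C1; simpl. apply injective_projections; simpl; field; lra. }
  rewrite (Lu Lp HLp), (Lu Lp' HLp').
  replace (Csub (Cmul (vnorm u / d0, 0) (Lp w)) (Cmul (vnorm u / d0, 0) (Lp' w)))
    with (Cmul (vnorm u / d0, 0) (Csub (Lp w) (Lp' w))) by Ceq.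
  rewrite Cmod_mul, Cmod_real, Rabs_pos_eq by (apply Rlt_le, Rdiv_lt_0_compat; lra).
  apply Rle_trans with (vnorm u / d0 * (4 * (eps * d0 / 4))); [|right; field; lra].
  apply Rmult_le_compat_l; auto. apply Rlt_le, Rdiv_lt_0_compat; lra.
Qed.

End UniformDifferentiability.

Definition Rderiv (phi : R -> Cplx) (t : R) (d : Cplx) : Prop :=
  forall eps, 0 < eps -> exists delta, 0 < delta /\
    forall s, Rabs s < delta -> Cmod (Csub (Csub (phi (t + s)) (phi t)) (Cmul (s, 0) d)) <= eps * Rabs s.

Lemma Rderiv_dot (phi : R -> Cplx) t d (A : Cplx) : Rderiv phi t d ->
  derivable_pt_lim (fun t => fst A * fst (phi t) + snd A * snd (phi t)) t (fst A * fst d + snd A * snd d).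
Proof.
  intros Hd eps He. destruct (Hd (eps / (2 * (Cmod A + 1)))) as [del [Hdel Ed]].
  { pose proof (Cmod_nonneg A). apply Rdiv_lt_0_compat; lra. }
  exists (mkposreal del Hdel). intros s Hs0 Hs. simpl in Hs. specialize (Ed s Hs).
  set (v := Csub (Csub (phi (t + s)) (phi t)) (Cmul (s, 0) d)) in *.
  replace ((fst A * fst (phi (t + s)) + snd A * snd (phi (t + s))
            - (fst A * fst (phi t) + snd A * snd (phi t))) / s
           - (fst A * fst d + snd A * snd d))
    with ((fst A * fst v + snd A * snd v) / s) by (unfold v, Csub, Cadd, Copp, Cmul; simpl; field; auto).
  unfold Rdiv. rewrite Rabs_mult, Rabs_inv.
  assert (Hdot : Rabs (fst A * fst v + snd A * snd v) <= Cmod A * Cmod v).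
  { apply Rabs_le. split; [|apply dot_le].
    pose proof (dot_le (Copp A) v) as H. rewrite Cmod_opp in H.
    change (fst (Copp A)) with (- fst A) in H. change (snd (Copp A)) with (- snd A) in H. lra. }
  assert (0 < Rabs s) by (apply Rabs_pos_lt; auto).
  pose proof (Cmod_nonneg A).
  apply Rle_lt_trans with (Cmod A * (eps / (2 * (Cmod A + 1)) * Rabs s) * / Rabs s).
  - apply Rmult_le_compat_r; [left; apply Rinv_0_lt_compat; auto|].
    eapply Rle_trans; [apply Hdot|]. apply Rmult_le_compat_l; auto.
  - replace (Cmod A * (eps / (2 * (Cmod A + 1)) * Rabs s) * / Rabs s)
      with (eps * (Cmod A / (2 * (Cmod A + 1)))) by (field; lra).
    assert (Cmod A / (2 * (Cmod A + 1)) < 1).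
    { apply Rmult_lt_reg_r with (2 * (Cmod A + 1)); [lra|].
      unfold Rdiv. rewrite Rmult_assoc, Rinv_l by lra. lra. }
    rewrite <- (Rmult_1_r eps) at 2. apply Rmult_lt_compat_l; auto.
Qed.

(** Mean value inequality for paths in C: pair with the direction of the total
    increment and apply the real mean value theorem. *)
Lemma MVI phi K : (forall t, 0 <= t <= 1 -> exists d, Rderiv phi t d /\ Cmod d <= K) ->
  Cmod (Csub (phi 1) (phi 0)) <= K.
Proof.
  intro H. set (A := Csub (phi 1) (phi 0)).
  assert (HK : 0 <= K) by (destruct (H 0 ltac:(lra)) as [d [_ Hd]]; pose proof (Cmod_nonneg d); lra).
  destruct (Req_dec (Cmod A) 0) as [E|E]; [rewrite E; auto|].
  assert (HA : 0 < Cmod A) by (pose proof (Cmod_nonneg A); lra).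
  set (D := fun t => epsilon (inhabits C0) (fun d => Rderiv phi t d /\ Cmod d <= K)).
  assert (HD : forall t, 0 <= t <= 1 -> Rderiv phi t (D t) /\ Cmod (D t) <= K)
    by (intros t Ht; unfold D; apply epsilon_spec, H; auto).
  set (psi := fun t => fst A * fst (phi t) + snd A * snd (phi t)).
  destruct (MVT.MVT_cor2 psi (fun t => fst A * fst (D t) + snd A * snd (D t)) 0 1 ltac:(lra))
    as [c [Hc1 Hc2]].
  { intros c Hc. apply Rderiv_dot, HD; auto. }
  assert (E1 : psi 1 - psi 0 = Cmod A * Cmod A)
    by (rewrite Cmod_sq; unfold psi, A, Csub, Cadd, Copp; simpl; ring).
  destruct (HD c ltac:(lra)) as [_ Hdc].
  assert (fst A * fst (D c) + snd A * snd (D c) <= Cmod A * K)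
    by (eapply Rle_trans; [apply dot_le|apply Rmult_le_compat_l; auto; apply Cmod_nonneg]).
  rewrite E1 in Hc1. nra.
Qed.

Lemma Rderiv_segment {X : CBanach} (f : X -> Cplx) (y h : X) t Lt :
  fderiv f (vadd y (vscal (t, 0) h)) Lt -> Rderiv (fun s => f (vadd y (vscal (s, 0) h))) t (Lt h).
Proof.
  intros [HLt D] e' He'. set (c := vnorm h + 1).
  assert (Hc : 0 < c) by (unfold c; pose proof (vnorm_nonneg h); lra).
  assert (Hlin : forall s, vnorm (vscal (s, 0) h) <= c * Rabs s).
  { intro s. rewrite vnorm_real_scal. pose proof (Rabs_pos s). unfold c. nra. }
  destruct (small_o_comp (Y := CC) _ (fun s : CC => vscal (fst s, 0) h) c Hc
      ltac:(intros s; simpl; eapply Rle_trans; [apply Hlin|];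
            apply Rmult_le_compat_l; [lra|apply Cmod_fst]) D e' He')
    as [del [Hdel E]].
  exists del. split; auto. intros s Hs. specialize (E (s, 0) ltac:(simpl; rewrite Cmod_real; auto)).
  simpl in E. rewrite Cmod_real in E.
  replace (vadd y (vscal (t + s, 0) h)) with (vadd (vadd y (vscal (t, 0) h)) (vscal (s, 0) h)).
  2:{ replace (t + s, 0) with (Cadd (t, 0) (s, 0)) by Ceq. rewrite <- vadd_assoc, <- vscal_distr_c. reflexivity. }
  destruct HLt as [[_ St] _]. rewrite St in E. exact E.
Qed.

(** Uniform Frechet differentiability on the ball of radius R1 < 1: the remainder
    f(y+h) - f(y) - f'(y)h is bounded by eps ||h|| for all ||y|| <= R1 once ||h|| is
    small, by the mean value inequality and [deriv_diff]. *)
Theorem unif_frechet {X : CBanach} (f : X -> Cplx) R1 :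
  holomorphic_on_B f -> unif_cont_on_B f -> 0 <= R1 < 1 ->
  forall eps, 0 < eps -> exists eta, 0 < eta /\ forall y L h, vnorm y <= R1 -> fderiv f y L ->
    vnorm h < eta -> Cmod (Csub (Csub (f (vadd y h)) (f y)) (L h)) <= eps * vnorm h.
Proof.
  intros Hf Uf HR eps He. set (d0 := (1 - R1)/4). assert (Hd0 : 0 < d0) by (unfold d0; lra).
  destruct (deriv_diff f R1 Hf Uf HR eps He) as [d1 [Hd1 DD]]. fold d0 in DD.
  exists (Rmin d0 d1). split; [apply Rmin_glb_lt; auto|]. intros y L h Hy FL Hh.
  assert (h0 : vnorm h < d0) by (eapply Rlt_le_trans; [apply Hh|apply Rmin_l]).
  assert (h1 : vnorm h < d1) by (eapply Rlt_le_trans; [apply Hh|apply Rmin_r]).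
  set (p := fun t : R => vadd y (vscal (t, 0) h)).
  assert (Hp : forall t, 0 <= t <= 1 -> vnorm (p t) <= R1 + d0 /\ vnorm (vsub (p t) y) <= vnorm h).
  { intros t Ht. unfold p. pose proof (vnorm_nonneg h). split.
    - eapply Rle_trans; [apply vnorm_triangle|]. rewrite vnorm_real_scal, Rabs_pos_eq by lra. nra.
    - rewrite vsub_add, vnorm_real_scal, Rabs_pos_eq by lra. nra. }
  assert (M := MVI (fun t => Csub (f (p t)) (Cmul (t, 0) (L h))) (eps * vnorm h)). cbv beta in M.
  replace (Csub (Csub (f (p 1)) (Cmul (1, 0) (L h))) (Csub (f (p 0)) (Cmul (0, 0) (L h))))
    with (Csub (Csub (f (vadd y h)) (f y)) (L h)) in M.
  2:{ unfold p. change (1, 0) with C1. change (0, 0) with C0. rewrite vscal_1, vscal_C0, vadd_0. Ceq. }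
  apply M. intros t Ht. destruct (Hp t Ht) as [Hp1 Hp2].
  apply holo_iff in Hf. destruct (Hf (p t)) as [Lt FLt]; [unfold inB; unfold d0 in Hp1; lra|].
  exists (Csub (Lt h) (L h)). split.
  - intros e' He'. destruct (Rderiv_segment f y h t Lt FLt e' He') as [del [Hdel E]].
    exists del. split; auto. intros s Hs. specialize (E s Hs).
    replace (Csub (Csub (Csub (f (p (t + s))) (Cmul (t + s, 0) (L h))) (Csub (f (p t)) (Cmul (t, 0) (L h))))
      (Cmul (s, 0) (Csub (Lt h) (L h))))
      with (Csub (Csub (f (p (t + s))) (f (p t))) (Cmul (s, 0) (Lt h))) by Ceq.
    exact E.
  - apply (DD (p t) y h Lt L); auto; unfold d0 in *; lra.
Qed.

(** ** Coordinates of finite-rank operators *)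

Section Coordinates.
Context {X : CBanach}.
Implicit Types (x y z u : X) (v w : nat -> X).

Definition span n v y : Prop := exists c, y = lincomb n c v.

Lemma span_zero n v : span n v vzero.
Proof. exists (fun _ => C0). induction n; simpl; auto. rewrite <- IHn, vscal_C0, vadd_0. auto. Qed.
Lemma span_add n v y z : span n v y -> span n v z -> span n v (vadd y z).
Proof. intros [c ->] [c' ->]. exists (fun i => Cadd (c i) (c' i)). rewrite lincomb_add; auto. Qed.
Lemma span_scal n v a y : span n v y -> span n v (vscal a y).
Proof. intros [c ->]. exists (fun i => Cmul a (c i)). rewrite lincomb_scal; auto. Qed.
Lemma span_sub n v y z : span n v y -> span n v z -> span n v (vsub y z).
Proof. intros. unfold vsub. apply span_add; auto. rewrite vopp_scal. apply span_scal; auto. Qed.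
Lemma span_lincomb n v m c w : (forall i, (i < m)%nat -> span n v (w i)) -> span n v (lincomb m c w).
Proof.
  induction m; simpl; intros H; [apply span_zero|].
  apply span_add; [apply IHm; auto|apply span_scal, H; lia].
Qed.
Lemma span_S n v y : span (S n) v y <-> exists z a, span n v z /\ y = vadd z (vscal a (v n)).
Proof.
  split.
  - intros [c ->]. exists (lincomb n c v), (c n). split; auto. exists c; auto.
  - intros [z [a [[c ->] ->]]]. exists (fun i => if Nat.eq_dec i n then a else c i). simpl.
    destruct (Nat.eq_dec n n); [|congruence]. f_equal. apply lincomb_ext.
    intros i Hi. destruct (Nat.eq_dec i n); [lia|auto].
Qed.
Lemma span_mono n v y : span n v y -> span (S n) v y.
Proof. intro H. apply span_S. exists y, C0. split; auto. rewrite vscal_C0, vadd_0; auto. Qed.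
Lemma span_last n v : span (S n) v (v n).
Proof. apply span_S. exists vzero, C1. split; [apply span_zero|]. rewrite vscal_1, vadd_0l. auto. Qed.

Definition coord_data n v m w (co : nat -> X -> Cplx) K : Prop :=
  0 <= K /\ (forall i, (i < m)%nat -> span n v (w i)) /\
  (forall y, span n v y -> y = lincomb m (fun i => co i y) w) /\
  (forall i y, span n v y -> Cmod (co i y) <= K * vnorm y) /\
  (forall i y z, span n v y -> span n v z -> co i (vadd y z) = Cadd (co i y) (co i z)) /\
  (forall i a y, span n v y -> co i (vscal a y) = Cmul a (co i y)).

Lemma coord_sub n v m w co K i y z : coord_data n v m w co K -> span n v y -> span n v z ->
  co i (vsub y z) = Csub (co i y) (co i z).
Proof.
  intros [_ [_ [_ [_ [A S]]]]] Hy Hz. unfold vsub.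
  rewrite A, vopp_scal, S; auto; [Ceq|]. rewrite vopp_scal. apply span_scal; auto.
Qed.

Lemma finite_N m (P : nat -> nat -> Prop) : (forall i, (i < m)%nat -> exists N, forall k, (N <= k)%nat -> P i k) ->
  exists N, forall k, (N <= k)%nat -> forall i, (i < m)%nat -> P i k.
Proof.
  induction m; intros H; [exists O; intros; lia|].
  destruct IHm as [N1 H1]; [intros; apply H; lia|]. destruct (H m ltac:(lia)) as [N2 H2].
  exists (Nat.max N1 N2). intros k Hk i Hi. destruct (Nat.eq_dec i m); [subst; apply H2; lia|apply H1; lia].
Qed.

Lemma lincomb_limit m w (c : nat -> nat -> Cplx) (a : nat -> Cplx) :
  (forall i eps, 0 < eps -> exists N, forall k, (N <= k)%nat -> Cmod (Csub (c k i) (a i)) < eps) ->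
  forall eps, 0 < eps -> exists N, forall k, (N <= k)%nat ->
    vnorm (vsub (lincomb m (c k) w) (lincomb m a w)) <= eps.
Proof.
  intros Hc eps He. set (W := rsum m (fun i => vnorm (w i)) + 1).
  assert (HW : 0 < W)
    by (unfold W; pose proof (rsum_nonneg m (fun i => vnorm (w i)) (fun i => vnorm_nonneg (w i))); lra).
  destruct (finite_N m (fun i k => Cmod (Csub (c k i) (a i)) < eps / W)) as [N HN].
  { intros i _. apply Hc. apply Rdiv_lt_0_compat; lra. }
  exists N. intros k Hk. rewrite <- lincomb_sub. eapply Rle_trans; [apply lincomb_norm|].
  apply Rle_trans with (eps / W * (W - 1)).
  - unfold W. replace (rsum m (fun i => vnorm (w i)) + 1 - 1) with (rsum m (fun i => vnorm (w i))) by ring.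
    rewrite <- rsum_scal. apply rsum_le. intros i Hi. apply Rmult_le_compat_r; [apply vnorm_nonneg|].
    left. apply HN; auto.
  - replace (eps / W * (W - 1)) with (eps - eps / W) by (field; lra).
    assert (0 < eps / W) by (apply Rdiv_lt_0_compat; lra). lra.
Qed.

Lemma inv_succ_small eps : 0 < eps -> exists N, forall k, (N <= k)%nat -> / (INR k + 1) < eps.
Proof.
  intros He. destruct (INR_unbounded (/ eps)) as [N HN]. exists N. intros k Hk.
  apply le_INR in Hk. rewrite <- (Rinv_inv eps). apply Rinv_lt_contravar; [|lra].
  apply Rmult_lt_0_compat; [apply Rinv_0_lt_compat; auto|pose proof (pos_INR k); lra].
Qed.

(** A finite-dimensional span with bounded coordinates is closed: coordinates of
    a sequence of span(v) converging to u are Cauchy, hence converge (C is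
    complete), and u is the combination of the limits. *)
Lemma span_closed n v m w co K u (zs : nat -> X) : coord_data n v m w co K ->
  (forall k, span n v (zs k)) -> (forall k, vnorm (vsub u (zs k)) < / (INR k + 1)) -> span n v u.
Proof.
  intros CD Hzs Hu. pose proof CD as [HK [Hw [Hrep [Hb _]]]].
  assert (Hlim : forall i, exists l, forall eps, 0 < eps -> exists N, forall k, (N <= k)%nat ->
    Cmod (Csub (co i (zs k)) l) < eps).
  { intro i. destruct (C_complete (fun k => co i (zs k))) as [l Hl].
    - intros eps He. destruct (inv_succ_small (eps / (2 * (K + 1)))) as [N HN]; [apply Rdiv_lt_0_compat; lra|].
      exists N. intros p q Hp Hq.
      change (Cadd (co i (zs p)) (Copp (co i (zs q)))) with (Csub (co i (zs p)) (co i (zs q))).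
      rewrite <- (coord_sub _ _ _ _ _ _ i _ _ CD (Hzs p) (Hzs q)).
      eapply Rle_lt_trans; [apply Hb, span_sub; auto|].
      assert (vnorm (vsub (zs p) (zs q)) < eps / (K + 1)).
      { eapply Rle_lt_trans; [apply (vsub_tri (zs p) u (zs q))|]. rewrite vnorm_sub_sym.
        pose proof (Hu p). pose proof (Hu q). pose proof (HN p Hp). pose proof (HN q Hq).
        replace (eps / (K+1)) with (eps / (2 * (K+1)) + eps / (2 * (K+1))) by (field; lra). lra. }
      apply Rle_lt_trans with ((K + 1) * vnorm (vsub (zs p) (zs q))).
      + apply Rmult_le_compat_r; [apply vnorm_nonneg|lra].
      + apply (Rmult_lt_compat_l (K + 1)) in H; [|lra].
        replace ((K+1) * (eps / (K+1))) with eps in H by (field; lra). auto.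
    - exists l. intros eps He. destruct (Hl eps He) as [N HN]. exists N. intros k Hk. apply HN; auto. }
  set (a := fun i => proj1_sig (constructive_indefinite_description _ (Hlim i))).
  assert (Ha : forall i eps, 0 < eps -> exists N, forall k, (N <= k)%nat -> Cmod (Csub (co i (zs k)) (a i)) < eps)
    by (intro i; unfold a; destruct (constructive_indefinite_description _ _) as [l Hl]; simpl; auto).
  assert (Hu0 : vnorm (vsub u (lincomb m a w)) = 0).
  { apply Rle_antisym; [|apply vnorm_nonneg]. apply Rnot_lt_le. intro Hpos.
    set (eta := vnorm (vsub u (lincomb m a w)) / 3).
    destruct (lincomb_limit m w (fun k i => co i (zs k)) a Ha eta ltac:(unfold eta; lra)) as [N1 HN1].
    destruct (inv_succ_small eta ltac:(unfold eta; lra)) as [N2 HN2].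
    set (k := Nat.max N1 N2). specialize (HN1 k ltac:(lia)). specialize (HN2 k ltac:(lia)).
    rewrite <- Hrep in HN1 by auto. pose proof (Hu k).
    pose proof (vsub_tri u (zs k) (lincomb m a w)). unfold eta in *. lra. }
  apply vnorm_eq0 in Hu0. replace u with (lincomb m a w); [apply span_lincomb; auto|].
  rewrite <- (vadd_sub u (lincomb m a w)), Hu0, vadd_0. auto.
Qed.

Lemma dist_pos n v m w co K u : coord_data n v m w co K -> ~ span n v u ->
  exists d, 0 < d /\ forall z, span n v z -> d <= vnorm (vsub u z).
Proof.
  intros CD Hu. apply NNPP. intro Hn.
  assert (Hseq : forall k : nat, exists z, span n v z /\ vnorm (vsub u z) < / (INR k + 1)).
  { intro k. apply NNPP. intro H. apply Hn. exists (/ (INR k + 1)).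
    split; [apply Rinv_0_lt_compat; pose proof (pos_INR k); lra|].
    intros z Hz. apply Rnot_lt_le. intro H'. apply H. exists z. auto. }
  apply Hu.
  apply (span_closed n v m w co K u (fun k => proj1_sig (constructive_indefinite_description _ (Hseq k))));
    auto;
    intro k; destruct (constructive_indefinite_description _ _) as [z Hz]; simpl; tauto.
Qed.

(** Adjoining a vector u outside span(v 0, ..., v (n-1)) = span_n: the coefficient
    of u is a well-defined linear functional on span_{n+1}, bounded by 1/dist(u, span_n). *)
Lemma new_coordinate n v m w co K : coord_data n v m w co K -> ~ span n v (v n) ->
  exists (al : X -> Cplx) d, 0 < d /\
    (forall y, span (S n) v y -> span n v (vsub y (vscal (al y) (v n)))) /\
    (forall y y', span (S n) v y -> span (S n) v y' -> al (vadd y y') = Cadd (al y) (al y')) /\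
    (forall a y, span (S n) v y -> al (vscal a y) = Cmul a (al y)) /\
    (forall y, span (S n) v y -> Cmod (al y) * d <= vnorm y).
Proof.
  intros CD Hu. set (u := v n) in *.
  destruct (dist_pos n v m w co K u CD Hu) as [d [Hd Hdist]].
  set (P := fun y a => span n v (vsub y (vscal a u))).
  assert (Uniq : forall y a b, P y a -> P y b -> a = b).
  { intros y a b Ha Hb'. apply NNPP. intro Hne.
    assert (Hd0 : Csub a b <> C0)
      by (intro E; apply Hne; replace a with (Cadd (Csub a b) b) by Ceq; rewrite E; Ceq).
    apply Hu. pose proof (span_sub n v _ _ Hb' Ha) as H. unfold P in *.
    rewrite vsub_sub_cancel, vsub_scal in H.
    apply (span_scal n v (Cinv (Csub a b))) in H.
    rewrite vscal_assoc, Cmul_comm, Cmul_inv_r, vscal_1 in H; auto. }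
  assert (Ex : forall y, span (S n) v y -> exists a, P y a).
  { intros y Hy. apply span_S in Hy as [z [a [Hz ->]]]. exists a. unfold P.
    rewrite (vadd_comm z), vsub_add. auto. }
  set (al := fun y => epsilon (inhabits C0) (P y)).
  assert (Hal : forall y, span (S n) v y -> P y (al y)) by (intros y Hy; apply epsilon_spec, Ex; auto).
  exists al, d. split; auto. split; [apply Hal|]. split; [|split].
  - intros y y' Hy Hy'. apply (Uniq (vadd y y')); [apply Hal, span_add; auto|].
    unfold P. rewrite vscal_distr_c, vsub_add_pair. apply span_add; apply Hal; auto.
  - intros a y Hy. apply (Uniq (vscal a y)); [apply Hal, span_scal; auto|].
    unfold P. rewrite <- vscal_assoc, <- vscal_sub. apply span_scal; apply Hal; auto.
  - intros y Hy. set (a := al y). destruct (Req_dec (Cmod a) 0) as [E|E].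
    { rewrite E. pose proof (vnorm_nonneg y). lra. }
    assert (Ha0 : a <> C0) by (intro E'; apply E; rewrite E'; apply Cmod_C0).
    set (z' := vscal (Copp (Cinv a)) (vsub y (vscal a u))).
    assert (Hz' : span n v z') by (apply span_scal, Hal; auto).
    assert (Ey : y = vscal a (vsub u z')).
    { unfold z'. rewrite vscal_sub, vscal_assoc.
      replace (Cmul a (Copp (Cinv a))) with (-1, 0 : R).
      2:{ replace (Cmul a (Copp (Cinv a))) with (Cmul (-1,0) (Cmul a (Cinv a))) by Ceq.
          rewrite Cmul_inv_r; auto. Ceq. }
      rewrite <- vopp_scal. unfold vsub at 1. rewrite vopp_opp, vadd_comm. symmetry. apply vadd_vsub_cancel. }
    rewrite Ey, vnorm_scal. apply Rmult_le_compat_l; [apply Cmod_nonneg|]. apply Hdist; auto.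
Qed.

Lemma coord_transfer n v m w co K : coord_data n v m w co K -> span n v (v n) ->
  coord_data (S n) v m w co K.
Proof.
  intros [HK [Hw [Hr [Hb [A Sc]]]]] Hu.
  assert (Hdown : forall y, span (S n) v y -> span n v y).
  { intros y Hy. apply span_S in Hy as [z [a [Hz ->]]]. apply span_add; auto. apply span_scal; auto. }
  split; [auto|split; [|split; [|split; [|split]]]].
  - intros i Hi. apply span_mono; auto.
  - intros y Hy. apply Hr; auto.
  - intros i y Hy. apply Hb; auto.
  - intros i y z Hy Hz. apply A; auto.
  - intros i a y Hy. apply Sc; auto.
Qed.

Lemma coord_extend n v m w co K : coord_data n v m w co K ->
  exists m' w' co' K', coord_data (S n) v m' w' co' K'.
Proof.
  intros CD. pose proof CD as [HK [Hw [Hr [Hb [A Sc]]]]].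
  destruct (classic (span n v (v n))) as [Hu|Hu];
    [exists m, w, co, K; apply coord_transfer; auto|].
  destruct (new_coordinate n v m w co K CD Hu) as [al [d [Hd [Hal [Hal_add [Hal_scal Hal_bd]]]]]].
  set (u := v n) in *. set (zp := fun y => vsub y (vscal (al y) u)).
  assert (Hzp : forall y, span (S n) v y -> vnorm (zp y) <= (1 + vnorm u / d) * vnorm y).
  { intros y Hy. unfold zp. eapply Rle_trans; [apply vnorm_sub_le|]. rewrite vnorm_scal.
    pose proof (Hal_bd y Hy). assert (Cmod (al y) <= vnorm y / d).
    { apply Rmult_le_reg_r with d; auto. replace (vnorm y / d * d) with (vnorm y) by (field; lra). lra. }
    pose proof (vnorm_nonneg u). apply Rle_trans with (vnorm y + vnorm y / d * vnorm u); [|right; field; lra].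
    apply Rplus_le_compat_l. apply Rmult_le_compat_r; auto. }
  assert (Hcoef : 0 <= vnorm u / d)
    by (apply Rmult_le_pos; [apply vnorm_nonneg|left; apply Rinv_0_lt_compat; auto]).
  assert (Hid : 0 < / d) by (apply Rinv_0_lt_compat; auto).
  exists (S m), (fun i => if Nat.eq_dec i m then u else w i),
    (fun i y => if Nat.eq_dec i m then al y else co i (zp y)), (K * (1 + vnorm u / d) + / d).
  split; [|split; [|split; [|split; [|split]]]].
  - pose proof (vnorm_nonneg u). nra.
  - intros i Hi. destruct (Nat.eq_dec i m); [apply span_last|apply span_mono, Hw; lia].
  - intros y Hy. simpl. destruct (Nat.eq_dec m m); [|congruence].
    rewrite (lincomb_ext m _ (fun i => co i (zp y)) _ w).
    + rewrite <- Hr by (apply Hal; auto). unfold zp. symmetry. apply vadd_vsub_cancel.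
    + intros i Hi. destruct (Nat.eq_dec i m); [lia|auto].
  - intros i y Hy. pose proof (vnorm_nonneg y). destruct (Nat.eq_dec i m).
    + pose proof (Hal_bd y Hy). apply Rle_trans with (/ d * vnorm y).
      * apply Rmult_le_reg_r with d; auto. replace (/ d * vnorm y * d) with (vnorm y) by (field; lra). lra.
      * apply Rmult_le_compat_r; auto. nra.
    + eapply Rle_trans; [apply Hb, Hal; auto|].
      apply Rle_trans with (K * ((1 + vnorm u / d) * vnorm y)); [apply Rmult_le_compat_l; auto|nra].
  - intros i y z Hy Hz. destruct (Nat.eq_dec i m); [apply Hal_add; auto|].
    rewrite <- A by (apply Hal; auto). f_equal. unfold zp.
    rewrite Hal_add, vscal_distr_c by auto. apply vsub_add_pair.
  - intros i a y Hy. destruct (Nat.eq_dec i m); [apply Hal_scal; auto|].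
    rewrite <- Sc by (apply Hal; auto). f_equal. unfold zp.
    rewrite Hal_scal, <- vscal_assoc, vscal_sub by auto. auto.
Qed.

Lemma coord_exists n v : exists m w co K, coord_data n v m w co K.
Proof.
  induction n as [|n [m [w [co [K CD]]]]]; [|apply (coord_extend n v m w co K CD)].
  exists O, v, (fun _ _ => C0), 0. split; [lra|split; [|split; [|split; [|split]]]].
  - intros; lia.
  - intros y [c ->]. reflexivity.
  - intros i y _. rewrite Cmod_C0. pose proof (vnorm_nonneg y). lra.
  - intros; Ceq.
  - intros; Ceq.
Qed.

Theorem finite_rank_coords (S : X -> X) : bounded_op S -> finite_rank S ->
  exists m (w : nat -> X) (l : nat -> X -> Cplx),
    (forall i, in_dual (l i)) /\ forall x, S x = lincomb m (fun i => l i x) w.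
Proof.
  intros HS [n [v Hv]]. pose proof HS as [S1 [S2 _]].
  destruct (bounded_op_bound S HS) as [MS [HMS0 HMS]].
  destruct (coord_exists n v) as [m [w [co [K CD]]]]. pose proof CD as [HK [Hw [Hr [Hb [A Sc]]]]].
  assert (Hsp : forall x, span n v (S x)) by (intro x; destruct (Hv x) as [c Hc]; exists c; auto).
  exists m, w, (fun i x => co i (S x)). split.
  - intro i. split; [split|].
    + intros x y. rewrite S1. apply A; auto.
    + intros a x. rewrite S2. apply Sc; auto.
    + exists (K * MS). intro x. eapply Rle_trans; [apply Hb; auto|].
      rewrite Rmult_assoc. apply Rmult_le_compat_l; auto.
  - intro x. apply Hr; auto.
Qed.

End Coordinates.

(** ** The telescoping estimate *)

Lemma increment_vs_quotients {X : CBanach} (f : X -> Cplx) y L eps eta m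
    (a : nat -> Cplx) (w : nat -> X) s t :
  Clinear_fun L -> 0 <= eps -> 0 < s -> 0 < t ->
  (forall h, vnorm h < eta -> Cmod (Csub (Csub (f (vadd y h)) (f y)) (L h)) <= eps * vnorm h) ->
  vnorm (vscal (- s, 0) (lincomb m a w)) < eta -> (forall i, (i < m)%nat -> t * vnorm (w i) < eta) ->
  Cmod (Cadd (Csub (f (vadd y (vscal (- s, 0) (lincomb m a w)))) (f y))
             (csum m (fun i => Cmul (a i) (Cmul (s / t, 0) (Csub (f (vadd y (vscal (t, 0) (w i)))) (f y))))))
  <= eps * (s * vnorm (lincomb m a w)) + eps * s * rsum m (fun i => Cmod (a i) * vnorm (w i)).
Proof.
  intros HL He Hs Ht UF Hh Hwi. pose proof HL as [_ LS].
  set (h := vscal (- s, 0) (lincomb m a w)) in *.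
  set (e0 := Csub (Csub (f (vadd y h)) (f y)) (L h)).
  set (ei := fun i => Csub (Csub (f (vadd y (vscal (t, 0) (w i)))) (f y)) (L (vscal (t, 0) (w i)))).
  assert (ELh : L h = Cmul (- s, 0) (csum m (fun i => Cmul (a i) (L (w i))))).
  { unfold h. rewrite LS, dual_lincomb; auto. }
  assert (Eq : Cadd (Csub (f (vadd y h)) (f y))
             (csum m (fun i => Cmul (a i) (Cmul (s / t, 0) (Csub (f (vadd y (vscal (t, 0) (w i)))) (f y)))))
           = Cadd e0 (csum m (fun i => Cmul (a i) (Cmul (s / t, 0) (ei i))))).
  { replace (csum m (fun i => Cmul (a i) (Cmul (s / t, 0) (Csub (f (vadd y (vscal (t, 0) (w i)))) (f y)))))
      with (Cadd (csum m (fun i => Cmul (a i) (Cmul (s / t, 0) (ei i))))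
                 (Cmul (s, 0) (csum m (fun i => Cmul (a i) (L (w i)))))).
    - unfold e0. rewrite ELh. Ceq.
    - rewrite <- csum_scal, <- csum_add. apply csum_ext. intros i Hi. unfold ei. rewrite LS.
      destruct (a i) as [a1 a2], (L (w i)) as [b1 b2],
        (f (vadd y (vscal (t, 0) (w i)))) as [u1 u2], (f y) as [v1 v2].
      unfold Csub, Cadd, Copp, Cmul. apply injective_projections; simpl; field; lra. }
  rewrite Eq. eapply Rle_trans; [apply Cmod_tri|]. apply Rplus_le_compat.
  - eapply Rle_trans; [apply UF; auto|]. unfold h. rewrite vnorm_real_scal, Rabs_left by lra. right; ring.
  - eapply Rle_trans; [apply csum_bound|]. rewrite <- rsum_scal. apply rsum_le. intros i Hi.
    rewrite !Cmod_mul, Cmod_real, Rabs_pos_eq by (apply Rlt_le, Rdiv_lt_0_compat; lra).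
    assert (Hei : Cmod (ei i) <= eps * (t * vnorm (w i))).
    { unfold ei. eapply Rle_trans; [apply UF; rewrite vnorm_real_scal, Rabs_pos_eq by lra; auto|].
      rewrite vnorm_real_scal, Rabs_pos_eq by lra. lra. }
    apply Rle_trans with (Cmod (a i) * (s / t * (eps * (t * vnorm (w i))))).
    + apply Rmult_le_compat_l; [apply Cmod_nonneg|]. apply Rmult_le_compat_l; auto.
      apply Rlt_le, Rdiv_lt_0_compat; lra.
    + right. field. lra.
Qed.

Lemma dual_sum_bound {X : CBanach} (l : nat -> X -> Cplx) (w : nat -> X) m : (forall i, in_dual (l i)) ->
  exists C, 0 <= C /\ forall x, rsum m (fun i => Cmod (l i x) * vnorm (w i)) <= C * vnorm x.
Proof.
  intro Hl. induction m as [|m [C [HC HCx]]].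
  - exists 0. split; [lra|]. intros; simpl. pose proof (vnorm_nonneg x); nra.
  - destruct (dual_bound _ (Hl m)) as [M [HM BM]]. pose proof (vnorm_nonneg (w m)).
    exists (C + M * vnorm (w m)). split; [nra|]. intro x. simpl.
    specialize (HCx x). specialize (BM x). pose proof (vnorm_nonneg x).
    assert (Cmod (l m x) * vnorm (w m) <= M * vnorm x * vnorm (w m)) by (apply Rmult_le_compat_r; auto). nra.
Qed.

Section Telescoping.
Context {X : CBanach}.
Variable S : X -> X.
Hypothesis HS : bounded_op S.
Hypothesis HP : op_norm_is (fun x => vsub x (S x)) 1.

Definition Qop (t : R) (x : X) : X := vadd x (vscal (- t, 0) (S x)).

Lemma Q_bounded t : bounded_op (Qop t).
Proof.
  pose proof HS as [A [Sc _]]. destruct (bounded_op_bound S HS) as [M [HM HMS]].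
  unfold Qop. split; [|split].
  - intros x y. rewrite A, vscal_distr_v. apply vadd_4.
  - intros a x. rewrite Sc, vscal_distr_v, !vscal_assoc, Cmul_comm. auto.
  - exists (1 + Rabs t * M). intro x. eapply Rle_trans; [apply vnorm_triangle|].
    rewrite vnorm_real_scal, Rabs_Ropp. specialize (HMS x).
    pose proof (Rabs_pos t). pose proof (vnorm_nonneg x).
    assert (Rabs t * vnorm (S x) <= Rabs t * (M * vnorm x)) by (apply Rmult_le_compat_l; auto). nra.
Qed.

Lemma P_eq x : vsub x (S x) = Qop 1 x.
Proof. unfold Qop, vsub. rewrite vopp_scal. auto. Qed.
Lemma Q_0 x : Qop 0 x = x.
Proof. unfold Qop. replace (-0, 0) with C0 by Ceq. rewrite vscal_C0, vadd_0. auto. Qed.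
Lemma Q_step t s x : Qop (t + s) x = vadd (Qop t x) (vscal (- s, 0) (S x)).
Proof. unfold Qop. rewrite <- vadd_assoc, <- vscal_distr_c. do 2 f_equal. Ceq. Qed.

(** ||P|| = 1 makes P, hence every Q_t with 0 <= t <= 1 (a convex combination of
    I and P), a contraction. *)
Lemma P_contr x : vnorm (vsub x (S x)) <= vnorm x.
Proof.
  pose proof HS as [_ [Sc _]]. destruct (Req_dec (vnorm x) 0) as [E|E].
  { apply vnorm_eq0 in E. subst. rewrite (lin_zero S Sc), vsub_diag, vnorm_zero. lra. }
  assert (Hx : 0 < vnorm x) by (pose proof (vnorm_nonneg x); lra).
  assert (Hi : 0 < / vnorm x) by (apply Rinv_0_lt_compat; auto).
  destruct HP as [Hub _]. set (u := vscal (/ vnorm x, 0) x).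
  assert (Hu : vnorm u = 1) by (unfold u; rewrite vnorm_real_scal, Rabs_pos_eq; [field|]; lra).
  assert (H1 : vnorm (vsub u (S u)) <= 1) by (apply Hub; exists u; split; auto; lra).
  unfold u in H1. rewrite Sc, <- vscal_sub, vnorm_real_scal, Rabs_pos_eq in H1 by lra.
  apply Rmult_le_reg_l with (/ vnorm x); auto. rewrite Rinv_l; lra.
Qed.

Lemma Q_contr t x : 0 <= t <= 1 -> vnorm (Qop t x) <= vnorm x.
Proof.
  intro Ht. assert (E : Qop t x = vadd (vscal (1 - t, 0) x) (vscal (t, 0) (vsub x (S x)))).
  { rewrite P_eq. unfold Qop. rewrite vscal_distr_v, vadd_assoc, <- vscal_distr_c, vscal_assoc.
    replace (Cadd (1 - t, 0) (t, 0)) with C1 by Ceq. rewrite vscal_1. do 2 f_equal. Ceq. }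
  rewrite E. eapply Rle_trans; [apply vnorm_triangle|].
  rewrite !vnorm_real_scal, !Rabs_pos_eq by lra. pose proof (P_contr x). pose proof (vnorm_nonneg x). nra.
Qed.

Variables (m : nat) (w : nat -> X) (l : nat -> X -> Cplx).
Hypothesis Hl : forall i, in_dual (l i).
Hypothesis Hrep : forall x, S x = lincomb m (fun i => l i x) w.
Variable f : X -> Cplx.
Hypothesis Hf : in_Au f.
Variable r : R.
Hypothesis Hr : 0 < r < 1.

(** The dilate f_r, the nodes Q_{j/N} x, and the averaged difference quotients
    K_i(x) = sum_{j<N} (f_r(Q_{j/N} x + tau w_i) - f_r(Q_{j/N} x)) / (N tau). *)
Definition fr (z : X) : Cplx := f (vscal (r, 0) z).
Definition node (N j : nat) (x : X) : X := Qop (INR j / INR N) x.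
Definition quot (N : nat) (tau : R) (j i : nat) (x : X) : Cplx :=
  Cmul (/ (INR N * tau), 0) (Csub (fr (vadd (node N j x) (vscal (tau, 0) (w i)))) (fr (node N j x))).
Definition dquot (N : nat) (tau : R) (i : nat) (x : X) : Cplx := csum N (fun j => quot N tau j i x).

Lemma node_contr N j x : (0 < N)%nat -> (j <= N)%nat -> vnorm (node N j x) <= vnorm x.
Proof.
  intros HN Hj. apply Q_contr. apply lt_0_INR in HN. apply le_INR in Hj. split.
  - apply Rmult_le_pos; [apply pos_INR|left; apply Rinv_0_lt_compat; auto].
  - apply Rmult_le_reg_r with (INR N); auto. unfold Rdiv. rewrite Rmult_assoc, Rinv_l; lra.
Qed.

Lemma quot_in_Au N tau j i : (0 < N)%nat -> (j <= N)%nat -> 0 < tau -> tau * vnorm (w i) < 1 - r ->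
  in_Au (quot N tau j i).
Proof.
  intros HN Hj Htau Hw. apply in_Au_scal, in_Au_sub.
  - unfold fr. replace (fun x => f (vscal (r, 0) (vadd (node N j x) (vscal (tau, 0) (w i)))))
      with (fun x => f (vadd (vscal (r, 0) (node N j x)) (vscal (r, 0) (vscal (tau, 0) (w i)))))
      by (extensionality x; rewrite vscal_distr_v; auto).
    apply in_Au_comp_affine; auto; [apply bounded_scal_op, Q_bounded|].
    intros x Hx. unfold inB in *. eapply Rle_lt_trans; [apply vnorm_triangle|].
    rewrite !vnorm_real_scal, !Rabs_pos_eq by lra.
    pose proof (node_contr N j x HN Hj). pose proof (vnorm_nonneg (node N j x)). nra.
  - unfold fr. apply (in_Au_comp_lin f (fun x => vscal (r, 0) (node N j x))); auto;
      [apply bounded_scal_op, Q_bounded|].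
    intros x Hx. unfold inB in *. rewrite vnorm_real_scal, Rabs_pos_eq by lra.
    pose proof (node_contr N j x HN Hj). pose proof (vnorm_nonneg (node N j x)). nra.
Qed.

Lemma dquot_in_Au N tau i : (0 < N)%nat -> 0 < tau -> tau * vnorm (w i) < 1 - r -> in_Au (dquot N tau i).
Proof. intros. apply in_Au_csum. intros j Hj. apply quot_in_Au; auto; lia. Qed.

Definition step_defect (N : nat) (tau : R) (j : nat) (x : X) : Cplx :=
  Csub (Csub (fr (node N j x)) (fr (node N (Nat.succ j) x))) (csum m (fun i => Cmul (l i x) (quot N tau j i x))).

Lemma telescope N tau x : (0 < N)%nat ->
  Csub (Csub (fr x) (fr (vsub x (S x)))) (csum m (fun i => Cmul (l i x) (dquot N tau i x)))
  = csum N (fun j => step_defect N tau j x).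
Proof.
  intro HN. apply lt_0_INR in HN. unfold step_defect. rewrite csum_sub, csum_tele, csum_exch.
  assert (X0 : node N O x = x) by (unfold node; replace (INR 0 / INR N) with 0 by (simpl; field; lra); apply Q_0).
  assert (XN : node N N x = vsub x (S x))
    by (unfold node; replace (INR N / INR N) with 1 by (field; lra); rewrite P_eq; auto).
  rewrite X0, XN. f_equal. apply csum_ext. intros i Hi. unfold dquot. rewrite <- csum_scal. auto.
Qed.

(** At y = r Q_{j/N} x, one telescoping step is (minus) the expression estimated
    in [increment_vs_quotients], with s = r/N, t = r tau and a_i = l_i(x). *)
Lemma step_defect_as_increment N tau j x : (0 < N)%nat -> 0 < tau ->
  let y := vscal (r, 0) (node N j x) in
  step_defect N tau j x =
  Copp (Cadd (Csub (f (vadd y (vscal (- (r / INR N), 0) (lincomb m (fun i => l i x) w)))) (f y))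
    (csum m (fun i => Cmul (l i x) (Cmul (r / INR N / (r * tau), 0)
       (Csub (f (vadd y (vscal (r * tau, 0) (w i)))) (f y)))))).
Proof.
  intros HN Htau y. pose proof (lt_0_INR _ HN) as HNR.
  assert (Hstep : fr (node N (Nat.succ j) x) =
    f (vadd y (vscal (- (r / INR N), 0) (lincomb m (fun i => l i x) w)))).
  { unfold fr, node, y. rewrite <- Hrep.
    replace (INR (Nat.succ j) / INR N) with (INR j / INR N + / INR N) by (rewrite S_INR; field; lra).
    rewrite Q_step, vscal_distr_v, vscal_assoc. do 3 f_equal. unfold Cmul; simpl; f_equal; field; lra. }
  assert (Hquot : forall i, quot N tau j i x =
    Cmul (r / INR N / (r * tau), 0) (Csub (f (vadd y (vscal (r * tau, 0) (w i)))) (f y))).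
  { intro i. unfold quot, fr, y. rewrite vscal_distr_v, vscal_assoc.
    replace (Cmul (r, 0) (tau, 0)) with (r * tau, 0) by Ceq.
    replace (r / INR N / (r * tau)) with (/ (INR N * tau)) by (field; lra). reflexivity. }
  unfold step_defect. rewrite Hstep. change (fr (node N j x)) with (f y).
  rewrite (csum_ext m _ _ (fun i Hi => f_equal (Cmul (l i x)) (Hquot i))). Ceq.
Qed.

Lemma step_defect_bound N tau eps eta MS C j x :
  (0 < N)%nat -> (j < N)%nat -> 0 < tau -> 0 <= eps -> inB x ->
  (forall y L h, vnorm y <= r -> fderiv f y L -> vnorm h < eta ->
     Cmod (Csub (Csub (f (vadd y h)) (f y)) (L h)) <= eps * vnorm h) ->
  vnorm (S x) <= MS -> MS / INR N < eta -> (forall i, (i < m)%nat -> r * tau * vnorm (w i) < eta) ->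
  rsum m (fun i => Cmod (l i x) * vnorm (w i)) <= C ->
  Cmod (step_defect N tau j x) <= eps * (MS + C) / INR N.
Proof.
  intros HN Hj Htau He Hx UF HSx HMS Hwi HC. pose proof (lt_0_INR _ HN) as HNR.
  assert (HrN : 0 < r / INR N) by (apply Rdiv_lt_0_compat; lra).
  set (y := vscal (r, 0) (node N j x)).
  assert (Hy : vnorm y <= r).
  { unfold y. rewrite vnorm_real_scal, Rabs_pos_eq by lra. unfold inB in Hx.
    pose proof (node_contr N j x HN ltac:(lia)). pose proof (vnorm_nonneg (node N j x)). nra. }
  pose proof Hf as [_ [Hhol _]]. apply holo_iff in Hhol.
  destruct (Hhol y) as [L HL]; [unfold inB; lra|]. pose proof HL as [[HLlin _] _].
  assert (Hsx : r / INR N * vnorm (S x) <= MS / INR N).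
  { pose proof (vnorm_nonneg (S x)). unfold Rdiv.
    replace (r * / INR N * vnorm (S x)) with (/ INR N * (r * vnorm (S x))) by ring.
    rewrite (Rmult_comm MS). apply Rmult_le_compat_l; [left; apply Rinv_0_lt_compat|]; nra. }
  assert (Hsum : r / INR N * rsum m (fun i => Cmod (l i x) * vnorm (w i)) <= C / INR N).
  { pose proof (rsum_nonneg m (fun i => Cmod (l i x) * vnorm (w i))
      (fun i => Rmult_le_pos _ _ (Cmod_nonneg _) (vnorm_nonneg _))). unfold Rdiv.
    replace (r * / INR N * rsum m (fun i => Cmod (l i x) * vnorm (w i)))
      with (/ INR N * (r * rsum m (fun i => Cmod (l i x) * vnorm (w i)))) by ring.
    rewrite (Rmult_comm C). apply Rmult_le_compat_l; [left; apply Rinv_0_lt_compat|]; nra. }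
  rewrite step_defect_as_increment, Cmod_opp by auto. fold y.
  eapply Rle_trans; [apply (increment_vs_quotients f y L eps eta m _ w (r / INR N) (r * tau)); auto|].
  - apply Rmult_lt_0_compat; lra.
  - rewrite <- Hrep, vnorm_real_scal, Rabs_left, Ropp_involutive by lra. lra.
  - rewrite <- Hrep.
    replace (eps * (MS + C) / INR N) with (eps * (MS / INR N) + eps * (C / INR N)) by (field; lra).
    rewrite Rmult_assoc. apply Rplus_le_compat; apply Rmult_le_compat_l; auto.
Qed.

Theorem telescoping_estimate eps : 0 < eps -> exists K : nat -> X -> Cplx,
  (forall i, (i < m)%nat -> in_Au (K i)) /\
  forall x, inB x -> Cmod (Csub (Csub (fr x) (fr (vsub x (S x)))) (csum m (fun i => Cmul (l i x) (K i x)))) <= eps.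
Proof.
  intros He. pose proof Hf as [_ [Hhol Hunif]].
  destruct (bounded_op_bound S HS) as [MS [HMS0 HMS]].
  destruct (dual_sum_bound l w m Hl) as [C [HC HCx]].
  set (eps' := eps / (MS + C + 1)). assert (He' : 0 < eps') by (unfold eps'; apply Rdiv_lt_0_compat; lra).
  destruct (unif_frechet f r Hhol Hunif ltac:(lra) eps' He') as [eta [Heta UF]].
  set (W := rsum m (fun i => vnorm (w i))).
  assert (HW : 0 <= W) by (apply rsum_nonneg; intros; apply vnorm_nonneg).
  set (q := Rmin eta (1 - r)). assert (Hq : 0 < q) by (unfold q; apply Rmin_glb_lt; lra).
  set (tau := q / (W + 1)). assert (Htau : 0 < tau) by (unfold tau; apply Rdiv_lt_0_compat; lra).
  assert (HtauW : forall i, (i < m)%nat -> tau * vnorm (w i) < q).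
  { intros i Hi. assert (vnorm (w i) <= W)
      by (apply (rsum_term m (fun i => vnorm (w i))); auto; intros; apply vnorm_nonneg).
    apply Rle_lt_trans with (tau * W); [apply Rmult_le_compat_l; lra|].
    unfold tau. replace (q / (W + 1) * W) with (q - q / (W + 1)) by (field; lra).
    assert (0 < q / (W + 1)) by (apply Rdiv_lt_0_compat; lra). lra. }
  destruct (INR_unbounded (MS / eta + 1)) as [N HN].
  assert (HMSeta : 0 <= MS / eta) by (apply Rmult_le_pos; [lra|left; apply Rinv_0_lt_compat; auto]).
  assert (HNpos : (0 < N)%nat) by (apply INR_lt; simpl; lra).
  assert (HNR : MS / INR N < eta).
  { apply Rmult_lt_reg_r with (INR N); [lra|]. unfold Rdiv. rewrite Rmult_assoc, Rinv_l by lra.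
    apply Rmult_lt_reg_r with (/ eta); [apply Rinv_0_lt_compat; auto|].
    replace (eta * INR N * / eta) with (INR N) by (field; lra). rewrite Rmult_1_r. fold (MS / eta). lra. }
  exists (dquot N tau). split.
  - intros i Hi. apply dquot_in_Au; auto.
    pose proof (HtauW i Hi). pose proof (Rmin_r eta (1 - r)). unfold q in *. lra.
  - intros x Hx. rewrite telescope by auto. eapply Rle_trans; [apply csum_bound|].
    apply Rle_trans with (rsum N (fun _ => eps' * (MS + C) / INR N)).
    + apply rsum_le. intros j Hj. unfold inB in Hx. pose proof (vnorm_nonneg x).
      apply (step_defect_bound N tau eps' eta MS C j x); auto; try lra.
      * specialize (HMS x). nra.
      * intros i Hi. pose proof (HtauW i Hi). pose proof (Rmin_l eta (1 - r)). unfold q in *.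
        pose proof (vnorm_nonneg (w i)). assert (0 <= tau * vnorm (w i)) by (apply Rmult_le_pos; lra). nra.
      * specialize (HCx x). nra.
    + rewrite rsum_const. replace (INR N * (eps' * (MS + C) / INR N)) with (eps' * (MS + C)) by (field; lra).
      unfold eps'. replace (eps / (MS + C + 1) * (MS + C)) with (eps - eps / (MS + C + 1)) by (field; lra).
      assert (0 < eps / (MS + C + 1)) by (apply Rdiv_lt_0_compat; lra). lra.
Qed.

End Telescoping.

(** ** The fiber over 0 annihilates the closed ideal generated by X^* *)

Definition ideal_approx {X : CBanach} (g : X -> Cplx) : Prop :=
  forall eps, 0 < eps -> exists m (l K : nat -> X -> Cplx),
    (forall i, in_dual (l i)) /\ (forall i, (i < m)%nat -> in_Au (K i)) /\
    forall x, inB x -> Cmod (Csub (g x) (csum m (fun i => Cmul (l i x) (K i x)))) <= eps.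

(** phi(sum_i l_i K_i) = sum_i phi(l_i) phi(K_i) = 0 and phi is contractive. *)
Lemma fiber0_kills_ideal {X : CBanach} (phi : (X -> Cplx) -> Cplx) (g : X -> Cplx) :
  in_fiber0 phi -> in_Au g -> ideal_approx g -> phi g = C0.
Proof.
  intros [Hch H0] Hg Happ. apply Cmod_eq0, Rle_antisym; [|apply Cmod_nonneg].
  apply Rnot_lt_le. intro Hpos. destruct (Happ (Cmod (phi g) / 2)) as [m [l [K [Hl [HK Hclose]]]]]; [lra|].
  assert (HlK : forall i, (i < m)%nat -> in_Au (fun x => Cmul (l i x) (K i x)))
    by (intros; apply in_Au_mul; auto; apply in_Au_dual; auto).
  assert (Hsum : phi (fun x => csum m (fun i => Cmul (l i x) (K i x))) = C0).
  { rewrite (phi_csum phi Hch m (fun i x => Cmul (l i x) (K i x))) by auto.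
    rewrite (csum_ext m _ (fun _ => C0)); [apply csum_zero|].
    intros i Hi. rewrite phi_mul, H0; auto; [apply Cmul_0_l|apply in_Au_dual; auto]. }
  assert (Hb := phi_bound phi Hch _ _ (in_Au_sub _ _ Hg (in_Au_csum m _ HlK)) Hclose).
  rewrite phi_sub, Hsum in Hb by (auto; apply in_Au_csum; auto).
  replace (Csub (phi g) C0) with (phi g) in Hb by Ceq. lra.
Qed.

Lemma inB_scal {X : CBanach} (r : R) (z : X) : 0 <= r <= 1 -> inB z -> inB (vscal (r, 0) z).
Proof.
  intros Hr Hz. unfold inB in *. rewrite vnorm_real_scal, Rabs_pos_eq by lra.
  pose proof (vnorm_nonneg z). nra.
Qed.

Lemma dilate_close {X : CBanach} (f : X -> Cplx) e d r : 0 < d ->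
  (forall x y : X, inB x -> inB y -> vnorm (vsub x y) < d -> Cmod (Csub (f x) (f y)) < e) ->
  0 < r < 1 -> 1 - r < d -> forall z : X, inB z -> Cmod (Csub (f z) (f (vscal (r, 0) z))) <= e.
Proof.
  intros Hd U Hr Hrd z Hz. left. apply U; auto; [apply inB_scal; auto; lra|].
  rewrite <- (vscal_1 z) at 1. rewrite vsub_scal. replace (Csub C1 (r, 0)) with (1 - r, 0) by Ceq.
  rewrite vnorm_real_scal, Rabs_pos_eq by lra. unfold inB in Hz. pose proof (vnorm_nonneg z). nra.
Qed.

(** f - f o P lies in the closed ideal generated by X^*: split it as
    (f - f_r) - (f - f_r) o P + (f_r - f_r o P) with r close to 1. *)
Lemma defect_approx {X : CBanach} (S : X -> X) (f : X -> Cplx) :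
  bounded_op S -> finite_rank S -> op_norm_is (fun x => vsub x (S x)) 1 -> in_Au f ->
  ideal_approx (fun x => Csub (f x) (f (vsub x (S x)))).
Proof.
  intros HS Hfr HP Hf eps He. pose proof Hf as [_ [_ Hunif]].
  destruct (finite_rank_coords S HS Hfr) as [m [w [l [Hl Hrep]]]].
  destruct (Hunif (eps / 4)) as [d [Hd U]]; [lra|].
  set (r := 1 - Rmin d 1 / 2).
  assert (Hmin : 0 < Rmin d 1 <= 1) by (split; [apply Rmin_glb_lt; lra|apply Rmin_r]).
  assert (Hr : 0 < r < 1) by (unfold r; lra).
  assert (Hrd : 1 - r < d) by (unfold r; pose proof (Rmin_l d 1); lra).
  destruct (telescoping_estimate S HS HP m w l Hl Hrep f Hf r Hr (eps / 2)) as [K [HK Hest]]; [lra|].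
  exists m, l, K. split; auto. split; auto. intros x Hx.
  assert (HPx : inB (vsub x (S x))) by (unfold inB in *; pose proof (P_contr S HS HP x); lra).
  specialize (Hest x Hx). unfold fr in Hest.
  pose proof (dilate_close f (eps/4) d r Hd U Hr Hrd x Hx) as E1.
  pose proof (dilate_close f (eps/4) d r Hd U Hr Hrd _ HPx) as E2.
  match goal with |- Cmod ?t <= _ => replace t with
    (Cadd (Csub (Csub (f x) (f (vscal (r, 0) x))) (Csub (f (vsub x (S x))) (f (vscal (r, 0) (vsub x (S x))))))
      (Csub (Csub (f (vscal (r, 0) x)) (f (vscal (r, 0) (vsub x (S x)))))
            (csum m (fun i => Cmul (l i x) (K i x)))))
    by Ceq end.
  eapply Rle_trans; [apply Cmod_tri|]. pose proof (Cmod_sub_le (Csub (f x) (f (vscal (r, 0) x)))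
    (Csub (f (vsub x (S x))) (f (vscal (r, 0) (vsub x (S x)))))). lra.
Qed.

(** f o P is in A_u(B) because P maps B into B, and phi(f - f o P) = 0 because
    f - f o P lies in the closed ideal generated by X^*. *)

Theorem proposition2p1 (X : CBanach) (S : X -> X)
  (HS : bounded_op S) (Hfr : finite_rank S)
  (HP : op_norm_is (fun x => vsub x (S x)) 1)
  (phi : (X -> Cplx) -> Cplx) (Hphi : in_fiber0 phi)
  (f : X -> Cplx) (Hf : in_Au f) :
  phi f = phi (fun x => f (vsub x (S x))).
Proof.
  pose proof Hphi as [Hch _].
  assert (HfP : in_Au (fun x => f (vsub x (S x)))).
  { apply (in_Au_comp_lin f (fun x => vsub x (S x))); auto.
    - replace (fun x => vsub x (S x)) with (Qop S 1) by (extensionality x; rewrite P_eq; auto).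
      apply Q_bounded; auto.
    - intros x Hx. unfold inB in *. pose proof (P_contr S HS HP x). lra. }
  assert (E : phi (fun x => Csub (f x) (f (vsub x (S x)))) = C0).
  { apply fiber0_kills_ideal; auto; [apply in_Au_sub; auto|apply defect_approx; auto]. }
  rewrite phi_sub in E by auto.
  replace (phi f) with (Cadd (Csub (phi f) (phi (fun x => f (vsub x (S x))))) (phi (fun x => f (vsub x (S x)))))
    by Ceq.
  rewrite E. apply Cadd_0_l.
Qed.
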